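(* In the resource theory of unital maps on a $d$-dimensional Hilbert space, with the currency $\mathcal C=\{C^k\}_{k=1}^d\cup\{\Omega\}$, $C^k=\{\Pi^k/k\}$, $\mathrm{Val}(C^k)=\log d-\log k$, $\mathrm{Val}(\Omega)=0$, for every density operator $\rho$ and every $0\le\varepsilon\le1$, $$\mathrm{Cost}(\mathcal B^\varepsilon(\rho))=\log d-\sup_{\sigma\in\mathcal B^\varepsilon(\rho)}\log\big\lfloor 2^{H_{\min}(\sigma)}\big\rfloor=\log d-\log\big\lfloor 2^{H_{\min}^\varepsilon(\rho)}\big\rfloor.$$
   Context: $\Omega$ is the set of density operators on a Hilbert space of dimension $d$ with fixed orthonormal basis; $\Pi^k$ is the projector onto the first $k$ basis vectors. Allowed transformations: $f_{\mathcal E}(V)=\{\mathcal E(\rho):\rho\in V\}$ for unital CPTP maps $\mathcal E$; $V\to W$ iff some such $\mathcal E$ maps every element of $V$ into $W$. $\mathrm{Cost}(V)=\inf\{\mathrm{Val}(C):C\in\mathcal C,\ C\to V\}$. $\mathcal B^\varepsilon(\rho)=\{\sigma\in\Omega: D(\sigma,\rho)\le\varepsilon\}$ is the closed $\varepsilon$-ball around $\rho$ with respect to a fixed continuous metric $D$ on density operators (e.g. trace distance). $H_{\min}(\sigma)=-\log\lambda_{\max}(\sigma)$ ($\lambda_{\max}$ the largest eigenvalue) and $H^\varepsilon_{\min}(\rho)=\sup_{\sigma\in\mathcal B^\varepsilon(\rho)}H_{\min}(\sigma)$; $\lfloor\cdot\rfloor$ is the floor; logarithms base 2. *)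

From Stdlib Require Import Reals Lra Lia Arith.
Open Scope R_scope.

Record C := mkC { re : R; im : R }.
Definition C0 : C := mkC 0 0.
Definition C1 : C := mkC 1 0.
Definition RtoC (r : R) : C := mkC r 0.
Definition Cadd (x y : C) : C := mkC (re x + re y) (im x + im y).
Definition Copp (x : C) : C := mkC (- re x) (- im x).
Definition Csub (x y : C) : C := Cadd x (Copp y).
Definition Cmul (x y : C) : C :=
  mkC (re x * re y - im x * im y) (re x * im y + im x * re y).
Definition Cconj (x : C) : C := mkC (re x) (- im x).
Definition Cmod (x : C) : R := sqrt (re x * re x + im x * im x).

Fixpoint Csum (n : nat) (f : nat -> C) : C :=
  match n with O => C0 | S n' => Cadd (Csum n' f) (f n') end.
Fixpoint Rsum (n : nat) (f : nat -> R) : R :=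
  match n with O => 0 | S n' => Rsum n' f + f n' end.

(* ---------- Matrices: entries indexed by nat; an m x m matrix uses indices < m ---------- *)
Definition Mat := nat -> nat -> C.
Definition Vec := nat -> C.

Definition supported (m : nat) (A : Mat) : Prop :=
  forall i j, (m <= i)%nat \/ (m <= j)%nat -> A i j = C0.
Definition Hermitian (m : nat) (A : Mat) : Prop :=
  forall i j, (i < m)%nat -> (j < m)%nat -> A i j = Cconj (A j i).
Definition quad (m : nat) (A : Mat) (v : Vec) : C :=
  Csum m (fun i => Csum m (fun j => Cmul (Cconj (v i)) (Cmul (A i j) (v j)))).
Definition PSD (m : nat) (A : Mat) : Prop :=
  Hermitian m A /\ forall v : Vec, im (quad m A v) = 0 /\ 0 <= re (quad m A v).
Definition trace (m : nat) (A : Mat) : C := Csum m (fun i => A i i).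

Definition Density (d : nat) (A : Mat) : Prop :=
  supported d A /\ PSD d A /\ trace d A = C1.

Definition Idm (d : nat) : Mat :=
  fun i j => if (Nat.ltb i d && Nat.eqb i j)%bool then C1 else C0.
Definition PiK (k : nat) : Mat :=
  fun i j => if (Nat.ltb i k && Nat.eqb i j)%bool then RtoC (/ INR k) else C0.

(* E(X)_{ij} = sum_{k,l<d} S i j k l * X_{kl}; every linear map M_d -> M_d has this form *)
Definition Superop := nat -> nat -> nat -> nat -> C.
Definition applyS (d : nat) (S : Superop) (X : Mat) : Mat :=
  fun i j => if (Nat.ltb i d && Nat.ltb j d)%bool
             then Csum d (fun k => Csum d (fun l => Cmul (S i j k l) (X k l)))
             else C0.
(* id_n (x) E acting on an (n*d) x (n*d) matrix, index p = a*d + i *)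
Definition ampl (n d : nat) (S : Superop) (X : Mat) : Mat :=
  fun p q =>
    if (Nat.ltb p (n * d) && Nat.ltb q (n * d))%bool then
      applyS d S (fun k l => X (p / d * d + k)%nat (q / d * d + l)%nat)
             (p mod d) (q mod d)
    else C0.
Definition CP (d : nat) (S : Superop) : Prop :=
  forall (n : nat) (X : Mat), supported (n * d) X -> PSD (n * d) X ->
    PSD (n * d) (ampl n d S X).
Definition TP (d : nat) (S : Superop) : Prop :=
  forall X : Mat, trace d (applyS d S X) = trace d X.
Definition Unital (d : nat) (S : Superop) : Prop :=
  forall i j, applyS d S (Idm d) i j = Idm d i j.
Definition UnitalChannel (d : nat) (S : Superop) : Prop :=
  CP d S /\ TP d S /\ Unital d S.

Definition Conv (d : nat) (V W : Mat -> Prop) : Prop :=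
  exists S, UnitalChannel d S /\ forall rho, V rho -> W (applyS d S rho).

Definition log2 (x : R) : R := ln x / ln 2.
(* floor: Int_part r = up r - 1 is the largest integer <= r *)
Definition floorR (x : R) : R := IZR (Int_part x).
Definition IsSup (P : R -> Prop) (s : R) : Prop :=
  (forall x, P x -> x <= s) /\ (forall b, (forall x, P x -> x <= b) -> s <= b).
Definition IsInf (P : R -> Prop) (s : R) : Prop :=
  (forall x, P x -> s <= x) /\ (forall b, (forall x, P x -> b <= x) -> b <= s).

Inductive coin := CoinK (k : nat) | CoinOmega.
Definition InCurrency (d : nat) (c : coin) : Prop :=
  match c with CoinK k => (1 <= k <= d)%nat | CoinOmega => True end.
Definition coinSet (d : nat) (c : coin) : Mat -> Prop :=
  match c with
  | CoinK k => fun A => A = PiK k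
  | CoinOmega => Density d
  end.
Definition Val (d : nat) (c : coin) : R :=
  match c with
  | CoinK k => log2 (INR d) - log2 (INR k)
  | CoinOmega => 0
  end.
Definition IsCost (d : nat) (V : Mat -> Prop) (x : R) : Prop :=
  IsInf (fun v => exists c, InCurrency d c /\ Conv d (coinSet d c) V /\ v = Val d c) x.

Definition IsEig (d : nat) (A : Mat) (l : R) : Prop :=
  exists v : Vec, (exists i, (i < d)%nat /\ v i <> C0) /\
    forall i, (i < d)%nat -> Csum d (fun j => Cmul (A i j) (v j)) = Cmul (RtoC l) (v i).
Definition LambdaMax (d : nat) (A : Mat) (l : R) : Prop :=
  IsEig d A l /\ forall m, IsEig d A m -> m <= l.
Definition Hmin (d : nat) (A : Mat) (h : R) : Prop :=
  exists l, LambdaMax d A l /\ h = - log2 l.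

Definition mdist (d : nat) (A B : Mat) : R :=
  Rsum d (fun i => Rsum d (fun j => Cmod (Csub (A i j) (B i j)))).
Definition IsMetricOn (d : nat) (D : Mat -> Mat -> R) : Prop :=
  forall x y z, Density d x -> Density d y -> Density d z ->
    0 <= D x y /\ (D x y = 0 <-> x = y) /\ D x y = D y x /\ D x z <= D x y + D y z.
Definition ContinuousOn (d : nat) (D : Mat -> Mat -> R) : Prop :=
  forall x y, Density d x -> Density d y -> forall e, 0 < e -> exists delta, 0 < delta /\
    forall x' y', Density d x' -> Density d y' ->
      mdist d x x' < delta -> mdist d y y' < delta -> Rabs (D x y - D x' y') < e.
Definition Ball (d : nat) (D : Mat -> Mat -> R) (eps : R) (rho : Mat) : Mat -> Prop :=
  fun sigma => Density d sigma /\ D sigma rho <= eps.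

(* A unital channel maps Pi^k/k to sigma exactly when sigma <= Id/k, i.e. when
   lambda_max(sigma) <= 1/k: necessity is positivity of the channel applied to
   Id - k Pi^k/k >= 0, sufficiency is the measure-and-prepare channel preparing sigma
   on the first k outcomes and (Id - k sigma)/(d - k) on the others.  So the coin C^k
   reaches the ball iff k <= 1/lambda_max(sigma) for some sigma in the ball.  The ball
   is compact and "sigma <= l Id" is a closed condition, so some sigma* in the ball
   minimises lambda_max; with m = floor(1/lambda_max(sigma* )) = floor(2^(H_min^eps)),
   the cheapest coin is C^m, and Omega reaches the ball only if m = d (Omega contains
   Pi^d/d). *)

From Stdlib Require Import Reals Lra Lia List ClassicalEpsilon FunctionalExtensionality ZArith.
Open Scope R_scope.

(** * Complex numbers and finite sums *)

Lemma C_ext (x y : C) : re x = re y -> im x = im y -> x = y.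
Proof. destruct x, y; simpl; intros -> ->; reflexivity. Qed.

Ltac Csolve := apply C_ext; simpl; ring.

Lemma C_ring_theory : ring_theory C0 C1 Cadd Cmul Csub Copp (@eq C).
Proof. constructor; intros; unfold Csub; Csolve. Qed.
Add Ring C_ring : C_ring_theory.

Lemma Cconj_add x y : Cconj (Cadd x y) = Cadd (Cconj x) (Cconj y). Proof. Csolve. Qed.
Lemma Cconj_mul x y : Cconj (Cmul x y) = Cmul (Cconj x) (Cconj y). Proof. Csolve. Qed.
Lemma Cconj_sub x y : Cconj (Csub x y) = Csub (Cconj x) (Cconj y). Proof. Csolve. Qed.
Lemma Cconj_involutive x : Cconj (Cconj x) = x. Proof. Csolve. Qed.
Lemma Cconj_0 : Cconj C0 = C0. Proof. Csolve. Qed.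
Lemma Cconj_1 : Cconj C1 = C1. Proof. Csolve. Qed.
Lemma Cconj_RtoC r : Cconj (RtoC r) = RtoC r. Proof. Csolve. Qed.
Lemma RtoC_opp a : RtoC (- a) = Copp (RtoC a). Proof. Csolve. Qed.

Lemma re_mul_conj_self x : re (Cmul (Cconj x) x) = re x * re x + im x * im x.
Proof. destruct x; simpl; ring. Qed.
Lemma im_mul_conj_self x : im (Cmul (Cconj x) x) = 0.
Proof. destruct x; simpl; ring. Qed.
Lemma Cnorm2_nonneg x : 0 <= re x * re x + im x * im x.
Proof. nra. Qed.
Lemma Cnorm2_eq0 x : re x * re x + im x * im x = 0 -> x = C0.
Proof. destruct x; simpl; intro H; apply C_ext; simpl; nra. Qed.

Lemma Csum_ext n f g : (forall i, (i < n)%nat -> f i = g i) -> Csum n f = Csum n g.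
Proof.
  induction n as [|n IH]; simpl; intros H; auto.
  rewrite IH by (intros; apply H; lia). rewrite H by lia; reflexivity.
Qed.
Lemma Rsum_ext n f g : (forall i, (i < n)%nat -> f i = g i) -> Rsum n f = Rsum n g.
Proof.
  induction n as [|n IH]; simpl; intros H; auto.
  rewrite IH by (intros; apply H; lia). rewrite H by lia; reflexivity.
Qed.
Lemma re_Csum n f : re (Csum n f) = Rsum n (fun i => re (f i)).
Proof. induction n; simpl; congruence. Qed.
Lemma im_Csum n f : im (Csum n f) = Rsum n (fun i => im (f i)).
Proof. induction n; simpl; congruence. Qed.
Lemma Csum_add n f g : Csum n (fun i => Cadd (f i) (g i)) = Cadd (Csum n f) (Csum n g).
Proof. induction n; simpl; [Csolve|rewrite IHn; ring]. Qed.
Lemma Csum_sub n f g : Csum n (fun i => Csub (f i) (g i)) = Csub (Csum n f) (Csum n g).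
Proof. induction n; simpl; [Csolve|rewrite IHn; ring]. Qed.
Lemma Csum_mul_l n c f : Csum n (fun i => Cmul c (f i)) = Cmul c (Csum n f).
Proof. induction n; simpl; [Csolve|rewrite IHn; ring]. Qed.
Lemma Csum_mul_r n c f : Csum n (fun i => Cmul (f i) c) = Cmul (Csum n f) c.
Proof. induction n; simpl; [Csolve|rewrite IHn; ring]. Qed.
Lemma Csum_const n c : Csum n (fun _ => c) = Cmul (RtoC (INR n)) c.
Proof. induction n; simpl Csum; [Csolve|]. rewrite IHn, S_INR; Csolve. Qed.
Lemma Csum_eq0 n f : (forall i, (i < n)%nat -> f i = C0) -> Csum n f = C0.
Proof.
  intros H; rewrite (Csum_ext n f (fun _ => C0)) by auto.
  rewrite Csum_const; Csolve.
Qed.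
Lemma Cconj_Csum n f : Cconj (Csum n f) = Csum n (fun i => Cconj (f i)).
Proof. induction n; simpl; [Csolve|]. rewrite Cconj_add, IHn; reflexivity. Qed.
Lemma Csum_swap n m f :
  Csum n (fun i => Csum m (fun j => f i j)) = Csum m (fun j => Csum n (fun i => f i j)).
Proof. induction n; simpl; [rewrite Csum_eq0; auto|rewrite IHn, Csum_add; auto]. Qed.
Lemma Csum_delta n j f : (j < n)%nat ->
  Csum n (fun i => if Nat.eqb i j then f i else C0) = f j.
Proof.
  induction n as [|n IH]; intros Hj; [lia|]. simpl.
  destruct (Nat.eq_dec j n) as [->|Hne].
  - rewrite Nat.eqb_refl, Csum_eq0; [ring|].
    intros i Hi; destruct (Nat.eqb_spec i n); [lia|auto].
  - rewrite IH by lia. destruct (Nat.eqb_spec n j); [lia|ring].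
Qed.
Lemma Csum_delta_r n j f : (j < n)%nat ->
  Csum n (fun i => if Nat.eqb j i then f i else C0) = f j.
Proof.
  intros H; rewrite <- (Csum_delta n j f H); apply Csum_ext; intros i _.
  rewrite Nat.eqb_sym; reflexivity.
Qed.
Lemma Csum_split n m f : Csum (n + m) f = Cadd (Csum n f) (Csum m (fun i => f (n + i)%nat)).
Proof.
  induction m; simpl; [rewrite Nat.add_0_r; ring|].
  rewrite Nat.add_succ_r; simpl; rewrite IHm; ring.
Qed.
Lemma Csum_prefix_const d k c g : (k <= d)%nat ->
  Csum d (fun a => if Nat.ltb a k then c else g a)
  = Cadd (Cmul (RtoC (INR k)) c) (Csum (d - k) (fun a => g (k + a)%nat)).
Proof.
  intros Hk. replace d with (k + (d - k))%nat at 1 by lia. rewrite Csum_split.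
  rewrite (Csum_ext k _ (fun _ => c)) by (intros a Ha; apply Nat.ltb_lt in Ha; rewrite Ha; auto).
  rewrite Csum_const. f_equal. apply Csum_ext; intros a _.
  replace (Nat.ltb (k + a) k) with false by (symmetry; apply Nat.ltb_ge; lia); reflexivity.
Qed.
Lemma Csum_blocks n d f :
  Csum (n * d) f = Csum n (fun c => Csum d (fun i => f (c * d + i)%nat)).
Proof.
  induction n; simpl; auto. replace (d + n * d)%nat with (n * d + d)%nat by lia.
  rewrite Csum_split, IHn; reflexivity.
Qed.

Lemma Rsum_le n f g : (forall i, (i < n)%nat -> f i <= g i) -> Rsum n f <= Rsum n g.
Proof.
  induction n; simpl; intros H; [lra|].
  assert (Rsum n f <= Rsum n g) by (apply IHn; intros; apply H; lia).
  specialize (H n (Nat.lt_succ_diag_r n)); lra.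
Qed.
Lemma Rsum_const n c : Rsum n (fun _ => c) = INR n * c.
Proof. induction n; simpl Rsum; [simpl; ring|]. rewrite IHn, S_INR; ring. Qed.
Lemma Rsum_nonneg n f : (forall i, (i < n)%nat -> 0 <= f i) -> 0 <= Rsum n f.
Proof.
  intros H. replace 0 with (Rsum n (fun _ => 0)) by (rewrite Rsum_const; ring).
  apply Rsum_le; auto.
Qed.
Lemma Rsum_scal n c f : Rsum n (fun i => c * f i) = c * Rsum n f.
Proof. induction n; simpl; [ring|rewrite IHn; ring]. Qed.
Lemma Rsum_term_le n f i : (forall k, (k < n)%nat -> 0 <= f k) -> (i < n)%nat -> f i <= Rsum n f.
Proof.
  induction n; intros H Hi; [lia|]. simpl.
  assert (0 <= Rsum n f) by (apply Rsum_nonneg; intros; apply H; lia).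
  destruct (Nat.eq_dec i n) as [->|]; [lra|].
  assert (f i <= Rsum n f) by (apply IHn; [intros; apply H|]; lia).
  specialize (H n ltac:(lia)); lra.
Qed.
Lemma Rsum_nonneg_eq0 n f : (forall i, (i < n)%nat -> 0 <= f i) -> Rsum n f = 0 ->
  forall i, (i < n)%nat -> f i = 0.
Proof.
  intros H0 H i Hi. pose proof (Rsum_term_le n f i H0 Hi). specialize (H0 i Hi). lra.
Qed.
Lemma Rsum_eq0 n f : (forall i, (i < n)%nat -> f i = 0) -> Rsum n f = 0.
Proof. intros H. rewrite (Rsum_ext n f (fun _ => 0)) by auto. rewrite Rsum_const; ring. Qed.

(** * Sesquilinear forms and positive semidefinite matrices *)

Definition inner (n : nat) (u v : Vec) : C := Csum n (fun i => Cmul (Cconj (u i)) (v i)).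
Definition mulmv (n : nat) (A : Mat) (v : Vec) : Vec :=
  fun i => Csum n (fun j => Cmul (A i j) (v j)).
Definition norm2 (n : nat) (v : Vec) : R := re (inner n v v).
Definition vcomb (v : Vec) (c : C) (w : Vec) : Vec := fun i => Cadd (v i) (Cmul c (w i)).

Definition QuadNonneg (n : nat) (A : Mat) : Prop := forall v, 0 <= re (quad n A v).
(* A <= l * Id in the Loewner order *)
Definition LeScalar (n : nat) (A : Mat) (l : R) : Prop :=
  forall v, re (quad n A v) <= l * norm2 n v.

Lemma quad_inner n A v : quad n A v = inner n v (mulmv n A v).
Proof. unfold quad, inner, mulmv. apply Csum_ext; intros i _. rewrite Csum_mul_l; reflexivity. Qed.
Lemma quad_ext n A B v w :
  (forall i j, (i < n)%nat -> (j < n)%nat -> A i j = B i j) ->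
  (forall i, (i < n)%nat -> v i = w i) -> quad n A v = quad n B w.
Proof.
  intros HA Hv. unfold quad. apply Csum_ext; intros i Hi; apply Csum_ext; intros j Hj.
  rewrite HA, !Hv by auto; reflexivity.
Qed.
Lemma quad_comb n A B a b v :
  quad n (fun i j => Cadd (Cmul a (A i j)) (Cmul b (B i j))) v
  = Cadd (Cmul a (quad n A v)) (Cmul b (quad n B v)).
Proof.
  unfold quad. rewrite <- !Csum_mul_l, <- Csum_add. apply Csum_ext; intros i _.
  rewrite <- !Csum_mul_l, <- Csum_add. apply Csum_ext; intros; ring.
Qed.
Lemma quad_scale n A c v : quad n (fun i j => Cmul c (A i j)) v = Cmul c (quad n A v).
Proof.
  unfold quad. rewrite <- Csum_mul_l. apply Csum_ext; intros.
  rewrite <- Csum_mul_l. apply Csum_ext; intros; ring.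
Qed.
Lemma trace_comb n A B a b :
  trace n (fun i j => Cadd (Cmul a (A i j)) (Cmul b (B i j)))
  = Cadd (Cmul a (trace n A)) (Cmul b (trace n B)).
Proof. unfold trace. rewrite <- !Csum_mul_l, <- Csum_add. reflexivity. Qed.

Lemma norm2_sum n v : norm2 n v = Rsum n (fun i => re (v i) * re (v i) + im (v i) * im (v i)).
Proof. unfold norm2, inner. rewrite re_Csum. apply Rsum_ext; intros; apply re_mul_conj_self. Qed.
Lemma norm2_nonneg n v : 0 <= norm2 n v.
Proof. rewrite norm2_sum; apply Rsum_nonneg; intros; apply Cnorm2_nonneg. Qed.
Lemma norm2_eq0 n v : norm2 n v = 0 -> forall i, (i < n)%nat -> v i = C0.
Proof.
  rewrite norm2_sum; intros H i Hi. apply Cnorm2_eq0.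
  refine (Rsum_nonneg_eq0 n _ _ H i Hi); intros; apply Cnorm2_nonneg.
Qed.
Lemma inner_self n v : inner n v v = RtoC (norm2 n v).
Proof.
  apply C_ext; simpl; auto. unfold inner. rewrite im_Csum.
  apply Rsum_eq0; intros; apply im_mul_conj_self.
Qed.
Lemma Cconj_inner n u v : Cconj (inner n u v) = inner n v u.
Proof.
  unfold inner; rewrite Cconj_Csum; apply Csum_ext; intros.
  rewrite Cconj_mul, Cconj_involutive; ring.
Qed.
Lemma inner_ext n u u' v v' : (forall i, (i < n)%nat -> u i = u' i) ->
  (forall i, (i < n)%nat -> v i = v' i) -> inner n u v = inner n u' v'.
Proof. intros H1 H2; unfold inner; apply Csum_ext; intros; rewrite H1, H2; auto. Qed.
Lemma inner_comb_r n u v c w : inner n u (vcomb v c w) = Cadd (inner n u v) (Cmul c (inner n u w)).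
Proof. unfold inner, vcomb. rewrite <- Csum_mul_l, <- Csum_add. apply Csum_ext; intros; ring. Qed.
Lemma inner_comb_l n u v c w :
  inner n (vcomb v c w) u = Cadd (inner n v u) (Cmul (Cconj c) (inner n w u)).
Proof.
  unfold inner, vcomb. rewrite <- Csum_mul_l, <- Csum_add. apply Csum_ext; intros.
  rewrite Cconj_add, Cconj_mul; ring.
Qed.
Lemma mulmv_comb n A v c w : mulmv n A (vcomb v c w) = vcomb (mulmv n A v) c (mulmv n A w).
Proof.
  extensionality i. unfold mulmv, vcomb. rewrite <- Csum_mul_l, <- Csum_add.
  apply Csum_ext; intros; ring.
Qed.

Lemma hermitian_inner n A u v : Hermitian n A ->
  inner n u (mulmv n A v) = Cconj (inner n v (mulmv n A u)).
Proof.
  intros HA. unfold inner, mulmv. rewrite Cconj_Csum.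
  transitivity (Csum n (fun i => Csum n (fun j => Cmul (Cconj (u i)) (Cmul (A i j) (v j))))).
  { apply Csum_ext; intros; rewrite Csum_mul_l; auto. }
  rewrite Csum_swap. apply Csum_ext; intros j Hj.
  rewrite Cconj_mul, Cconj_Csum, <- Csum_mul_l. apply Csum_ext; intros i Hi.
  rewrite Cconj_mul, Cconj_involutive, (HA i j Hi Hj). ring.
Qed.

Lemma quad_vcomb_real n A v t u : Hermitian n A ->
  re (quad n A (vcomb v (RtoC t) u))
  = re (quad n A v) + 2 * t * re (inner n u (mulmv n A v)) + t * t * re (quad n A u).
Proof.
  intros HA. rewrite !quad_inner, mulmv_comb, inner_comb_l, !inner_comb_r, Cconj_RtoC.
  rewrite (hermitian_inner n A v u HA).
  destruct (inner n u (mulmv n A v)), (inner n u (mulmv n A u)), (inner n v (mulmv n A v)).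
  simpl. ring.
Qed.

(* Otherwise v - t B v would have negative energy for a small t > 0. *)
Lemma quad_nonneg_kernel n B v : Hermitian n B -> QuadNonneg n B -> re (quad n B v) = 0 ->
  forall i, (i < n)%nat -> mulmv n B v i = C0.
Proof.
  intros HB HP H0. set (u := mulmv n B v).
  assert (Hu : re (inner n u (mulmv n B v)) = norm2 n u) by reflexivity.
  set (a := norm2 n u). set (b := re (quad n B u)).
  assert (Hb : 0 <= b) by apply HP. assert (Ha : 0 <= a) by apply norm2_nonneg.
  assert (Ht := HP (vcomb v (RtoC (- a / (b + 1))) u)).
  rewrite quad_vcomb_real, H0, Hu in Ht by auto. fold a b in Ht.
  assert (Hq : 0 <= a * a * (- b - 2) / ((b + 1) * (b + 1))).
  { replace (a * a * (- b - 2) / ((b + 1) * (b + 1))) with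
      (0 + 2 * (- a / (b + 1)) * a + - a / (b + 1) * (- a / (b + 1)) * b) by (field; lra).
    lra. }
  assert (0 <= a * a * (- b - 2)).
  { apply Rmult_le_reg_r with (/ ((b + 1) * (b + 1))).
    - apply Rinv_0_lt_compat; nra.
    - rewrite Rmult_0_l; exact Hq. }
  apply norm2_eq0; fold u a; nra.
Qed.

Definition basis_vec (i : nat) (x : C) : Vec := fun l => if Nat.eqb l i then x else C0.
Definition basis_vec2 (i : nat) (x : C) (j : nat) (y : C) : Vec :=
  fun l => Cadd (basis_vec i x l) (basis_vec j y l).

Lemma Csum_mul_basis_vec n f i x : (i < n)%nat ->
  Csum n (fun l => Cmul (f l) (basis_vec i x l)) = Cmul (f i) x.
Proof.
  intros Hi. rewrite <- (Csum_delta n i (fun l => Cmul (f l) x) Hi).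
  apply Csum_ext; intros l _. unfold basis_vec; destruct (Nat.eqb l i); ring.
Qed.
Lemma inner_basis_vec n i x w : (i < n)%nat -> inner n (basis_vec i x) w = Cmul (Cconj x) (w i).
Proof.
  intros Hi. unfold inner. rewrite <- (Csum_delta n i (fun l => Cmul (Cconj x) (w l)) Hi).
  apply Csum_ext; intros l _. unfold basis_vec; destruct (Nat.eqb l i); [|rewrite Cconj_0]; ring.
Qed.
Lemma norm2_basis_vec n i : (i < n)%nat -> norm2 n (basis_vec i C1) = 1.
Proof. intros Hi. unfold norm2. rewrite inner_basis_vec by auto. unfold basis_vec.
  rewrite Nat.eqb_refl. simpl. ring. Qed.
Lemma quad_basis_vec n A i x : (i < n)%nat ->
  quad n A (basis_vec i x) = Cmul (Cconj x) (Cmul (A i i) x).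
Proof.
  intros Hi. rewrite quad_inner, inner_basis_vec by auto. unfold mulmv.
  rewrite Csum_mul_basis_vec; auto.
Qed.
Lemma quad_basis_vec2 n A i x j y : (i < n)%nat -> (j < n)%nat ->
  quad n A (basis_vec2 i x j y)
  = Cadd (Cadd (Cmul (Cconj x) (Cmul (A i i) x)) (Cmul (Cconj x) (Cmul (A i j) y)))
         (Cadd (Cmul (Cconj y) (Cmul (A j i) x)) (Cmul (Cconj y) (Cmul (A j j) y))).
Proof.
  intros Hi Hj. rewrite quad_inner.
  replace (mulmv n A (basis_vec2 i x j y))
    with (fun k => Cadd (Cmul (A k i) x) (Cmul (A k j) y)).
  2:{ extensionality k. unfold mulmv, basis_vec2.
      rewrite <- (Csum_mul_basis_vec n (A k) i x Hi), <- (Csum_mul_basis_vec n (A k) j y Hj).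
      rewrite <- Csum_add. apply Csum_ext; intros; ring. }
  transitivity (Cadd (inner n (basis_vec i x) (fun k => Cadd (Cmul (A k i) x) (Cmul (A k j) y)))
                     (inner n (basis_vec j y) (fun k => Cadd (Cmul (A k i) x) (Cmul (A k j) y)))).
  { unfold inner, basis_vec2. rewrite <- Csum_add. apply Csum_ext; intros. rewrite Cconj_add; ring. }
  rewrite !inner_basis_vec by auto. ring.
Qed.

Lemma hermitian_diag_real n A i : Hermitian n A -> (i < n)%nat -> im (A i i) = 0.
Proof. intros H Hi. pose proof (f_equal im (H i i Hi Hi)) as E. simpl in E. lra. Qed.
Lemma quad_nonneg_diag n A i : QuadNonneg n A -> (i < n)%nat -> 0 <= re (A i i).
Proof.
  intros H Hi. pose proof (H (basis_vec i C1)) as E. rewrite quad_basis_vec in E by auto.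
  destruct (A i i); simpl in *; lra.
Qed.

Lemma quad_nonneg_zero_diag n A i m : Hermitian n A -> QuadNonneg n A ->
  (i < n)%nat -> (m < n)%nat -> i <> m -> re (A m m) = 0 -> A i m = C0.
Proof.
  intros HH HP Hi Hm Him Hz.
  assert (Hmi : A m i = Cconj (A i m)) by (apply HH; auto).
  assert (Hmm : A m m = C0) by (apply C_ext; simpl; auto; eapply hermitian_diag_real; eauto).
  set (al := re (A i i)). assert (Hal : 0 <= al) by (apply (quad_nonneg_diag n); auto).
  set (t := / (al + 1)). assert (Ht : 0 < t) by (apply Rinv_0_lt_compat; lra).
  assert (Hta : t * al < 1).
  { unfold t. apply (Rmult_lt_reg_l (al + 1)); [lra|]. rewrite <- Rmult_assoc, Rinv_r by lra. lra. }
  pose proof (HP (basis_vec2 i (Cmul (RtoC (- t)) (A i m)) m C1)) as E.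
  rewrite quad_basis_vec2, Hmi, Hmm in E by auto.
  assert (Hai : A i i = RtoC al) by (apply C_ext; simpl; auto; eapply hermitian_diag_real; eauto).
  rewrite Hai in E. destruct (A i m) as [p q]. simpl in E.
  assert (E2 : 0 <= (p * p + q * q) * (t * (t * al - 2))) by (eapply Rle_trans; [exact E|]; right; ring).
  assert (Hn : t * (t * al - 2) < 0) by (apply Rmult_pos_neg; lra).
  assert (Hs : p * p + q * q <= 0).
  { destruct (Rle_or_lt (p * p + q * q) 0) as [|Hpos]; auto.
    pose proof (Rmult_pos_neg _ _ Hpos Hn); lra. }
  apply C_ext; simpl; nra.
Qed.

(** * Gram factorisation of positive semidefinite matrices *)

Definition GramFactor (m : nat) (A : Mat) (W : nat -> Vec) : Prop :=
  forall i j, (i < m)%nat -> (j < m)%nat ->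
    A i j = Csum m (fun r => Cmul (W r i) (Cconj (W r j))).

Definition VanishesAt (m : nat) (A : Mat) : Prop :=
  forall i, (i < S m)%nat -> A i m = C0 /\ A m i = C0.

Lemma quad_vanishes_at m A v : VanishesAt m A -> quad (S m) A v = quad m A v.
Proof.
  intros HZ. unfold quad. change (Csum (S m) ?f) with (Cadd (Csum m f) (f m)).
  rewrite (Csum_ext m (fun i => Csum (S m) _)
             (fun i => Csum m (fun j => Cmul (Cconj (v i)) (Cmul (A i j) (v j))))).
  - change (Csum (S m) ?f) with (Cadd (Csum m f) (f m)). cbv beta.
    rewrite (Csum_eq0 m (fun j => Cmul (Cconj (v m)) (Cmul (A m j) (v j)))).
    + rewrite (proj1 (HZ m ltac:(lia))); ring.
    + intros j Hj. rewrite (proj2 (HZ j ltac:(lia))); ring.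
  - intros i Hi. change (Csum (S m) ?f) with (Cadd (Csum m f) (f m)). cbv beta.
    rewrite (proj1 (HZ i ltac:(lia))); ring.
Qed.

Lemma hermitian_restrict m A : Hermitian (S m) A -> Hermitian m A.
Proof. intros H i j Hi Hj; apply H; lia. Qed.
Lemma quad_nonneg_restrict m A : VanishesAt m A -> QuadNonneg (S m) A -> QuadNonneg m A.
Proof. intros HZ H v. rewrite <- quad_vanishes_at by auto. apply H. Qed.

Lemma quad_sub_rank1 n A b v :
  quad n (fun i j => Csub (A i j) (Cmul (b i) (Cconj (b j)))) v
  = Csub (quad n A v) (Cmul (Cconj (inner n b v)) (inner n b v)).
Proof.
  unfold quad. rewrite Cconj_inner. unfold inner.
  rewrite <- Csum_mul_r, <- Csum_sub. apply Csum_ext; intros i _.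
  rewrite <- Csum_mul_l, <- Csum_sub. apply Csum_ext; intros; ring.
Qed.

(* One step of Cholesky: a factor of the Schur complement B, padded with the column b. *)
Lemma gram_factor_extend m A B b W : VanishesAt m B -> GramFactor m B W ->
  (forall i j, (i < S m)%nat -> (j < S m)%nat -> A i j = Cadd (B i j) (Cmul (b i) (Cconj (b j)))) ->
  GramFactor (S m) A (fun r i => if Nat.ltb r m then (if Nat.ltb i m then W r i else C0) else b i).
Proof.
  intros HZ HW HAB i j Hi Hj. change (Csum (S m) ?f) with (Cadd (Csum m f) (f m)). cbv beta.
  rewrite Nat.ltb_irrefl, HAB by auto.
  rewrite (Csum_ext m _ (fun r => Cmul (if Nat.ltb i m then W r i else C0)
                                      (Cconj (if Nat.ltb j m then W r j else C0))))
    by (intros r Hr; apply Nat.ltb_lt in Hr; rewrite Hr; reflexivity).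
  destruct (Nat.ltb_spec i m), (Nat.ltb_spec j m).
  - rewrite HW by auto. ring.
  - replace j with m by lia. rewrite (proj1 (HZ i Hi)), Csum_eq0; [ring|].
    intros; rewrite Cconj_0; ring.
  - replace i with m by lia. rewrite (proj2 (HZ j Hj)), Csum_eq0; [ring|]. intros; ring.
  - replace i with m by lia. rewrite (proj2 (HZ j Hj)), Csum_eq0; [ring|]. intros; ring.
Qed.

Section SchurComplement.
Variables (m : nat) (A : Mat) (s : R).
Hypothesis (HH : Hermitian (S m) A) (HP : QuadNonneg (S m) A).
Hypothesis (Hs : 0 < s) (Hss : s * s = re (A m m)).

Let b : Vec := fun i => Cmul (A i m) (RtoC (/ s)).
Let B : Mat := fun i j => Csub (A i j) (Cmul (b i) (Cconj (b j))).

Lemma schur_pivot_entry : b m = RtoC s.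
Proof.
  unfold b. assert (Him : im (A m m) = 0) by (apply (hermitian_diag_real (S m)); auto).
  apply C_ext; simpl; rewrite Him; [rewrite <- Hss; field|ring]; lra.
Qed.

Lemma schur_vanishes_at : VanishesAt m B.
Proof.
  intros i Hi. unfold B. rewrite schur_pivot_entry. split.
  - unfold b. apply C_ext; simpl; field; lra.
  - rewrite (HH m i) by lia. unfold b. apply C_ext; simpl; field; lra.
Qed.

Lemma schur_hermitian : Hermitian (S m) B.
Proof.
  intros i j Hi Hj. unfold B.
  rewrite Cconj_sub, Cconj_mul, Cconj_involutive, (HH i j Hi Hj). ring.
Qed.

(* v* B v equals v'* A v', where v' replaces the last coordinate so that <b, v'> = 0. *)
Lemma schur_quad_nonneg : QuadNonneg (S m) B.
Proof.
  intro v. set (v' := fun k => if Nat.eqb k m then Cmul (Copp (inner m b v)) (RtoC (/ s)) else v k).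
  assert (Hv' : forall k, (k < m)%nat -> v' k = v k)
    by (intros k Hk; unfold v'; destruct (Nat.eqb_spec k m); [lia|auto]).
  pose proof schur_vanishes_at as HZ.
  rewrite quad_vanishes_at, (quad_ext m B B v v'), <- quad_vanishes_at
    by (auto; intros; symmetry; auto).
  unfold B. rewrite quad_sub_rank1.
  replace (inner (S m) b v') with C0.
  - replace (re (Csub (quad (S m) A v') (Cmul (Cconj C0) C0))) with (re (quad (S m) A v'))
      by (simpl; ring).
    apply HP.
  - unfold inner. change (Csum (S m) ?f) with (Cadd (Csum m f) (f m)). cbv beta.
    fold (inner m b v'). rewrite (inner_ext m b b v' v) by auto.
    unfold v'. rewrite Nat.eqb_refl, schur_pivot_entry, Cconj_RtoC.
    apply C_ext; simpl; field; lra.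
Qed.

End SchurComplement.

Lemma quad_nonneg_gram_factor m A : Hermitian m A -> QuadNonneg m A -> exists W, GramFactor m A W.
Proof.
  revert A. induction m as [|m IH]; intros A HH HP.
  { exists (fun _ _ => C0). intros i j Hi; lia. }
  pose proof (quad_nonneg_diag (S m) A m HP ltac:(lia)) as Hre.
  destruct (Req_dec (re (A m m)) 0) as [Hz|Hnz].
  - assert (HZ : VanishesAt m A).
    { intros i Hi. assert (Aim : A i m = C0).
      { destruct (Nat.eq_dec i m) as [->|Hne].
        - apply C_ext; simpl; auto. apply (hermitian_diag_real (S m)); auto.
        - apply (quad_nonneg_zero_diag (S m)); auto. }
      split; auto. rewrite (HH m i), Aim by lia. apply Cconj_0. }
    destruct (IH A (hermitian_restrict m A HH) (quad_nonneg_restrict m A HZ HP)) as [W HW].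
    eexists. apply (gram_factor_extend m A A (fun _ => C0) W); auto.
    intros; ring.
  - set (s := sqrt (re (A m m))).
    assert (Hs : 0 < s) by (apply sqrt_lt_R0; lra).
    assert (Hss : s * s = re (A m m)) by (apply sqrt_sqrt; lra).
    pose proof (schur_vanishes_at m A s HH Hs Hss) as HZ.
    destruct (IH _ (hermitian_restrict m _ (schur_hermitian m A s HH))
                   (quad_nonneg_restrict m _ HZ (schur_quad_nonneg m A s HH HP Hs Hss))) as [W HW].
    eexists. apply (gram_factor_extend m A _ (fun i => Cmul (A i m) (RtoC (/ s))) W HZ HW).
    intros; ring.
Qed.

Lemma quad_gram_factor n A W v : GramFactor n A W ->
  quad n A v = Csum n (fun r => Cmul (Cconj (inner n (W r) v)) (inner n (W r) v)).
Proof.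
  intros HW. unfold quad.
  transitivity (Csum n (fun i => Csum n (fun j => Csum n (fun r =>
     Cmul (Cmul (Cconj (v i)) (W r i)) (Cmul (Cconj (W r j)) (v j)))))).
  { apply Csum_ext; intros i Hi; apply Csum_ext; intros j Hj. rewrite HW by auto.
    rewrite <- Csum_mul_r, <- Csum_mul_l. apply Csum_ext; intros; ring. }
  rewrite (Csum_ext n _ (fun i => Csum n (fun r => Csum n (fun j =>
     Cmul (Cmul (Cconj (v i)) (W r i)) (Cmul (Cconj (W r j)) (v j))))))
    by (intros; apply Csum_swap).
  rewrite Csum_swap. apply Csum_ext; intros r _.
  rewrite Cconj_inner. unfold inner. rewrite <- Csum_mul_r. apply Csum_ext; intros i _.
  rewrite <- Csum_mul_l. apply Csum_ext; intros; ring.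
Qed.

Lemma re_trace_gram_factor n A W : GramFactor n A W ->
  re (trace n A) = Rsum n (fun r => norm2 n (W r)).
Proof.
  intros HW. unfold trace.
  rewrite (Csum_ext n _ (fun i => Csum n (fun r => Cmul (W r i) (Cconj (W r i)))))
    by (intros; apply HW; auto).
  rewrite Csum_swap, re_Csum. apply Rsum_ext; intros r _.
  unfold norm2, inner. f_equal. apply Csum_ext; intros; ring.
Qed.

Lemma inner_cauchy_schwarz n u v :
  re (Cmul (Cconj (inner n u v)) (inner n u v)) <= norm2 n u * norm2 n v.
Proof.
  set (a := norm2 n u). assert (Ha : 0 <= a) by apply norm2_nonneg.
  destruct (Req_dec a 0) as [Ha0|Ha0].
  - replace (inner n u v) with C0.
    + rewrite Ha0. simpl. lra.
    + symmetry. unfold inner; apply Csum_eq0; intros i Hi.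
      rewrite (norm2_eq0 n u Ha0 i Hi), Cconj_0; ring.
  - pose proof (norm2_nonneg n (vcomb v (Cmul (Copp (inner n u v)) (RtoC (/ a))) u)) as Hw.
    unfold norm2 in Hw. rewrite inner_comb_l, !inner_comb_r, <- (Cconj_inner n u v) in Hw.
    rewrite (inner_self n u), (inner_self n v) in Hw. fold a in Hw.
    destruct (inner n u v) as [p q]. simpl in Hw |- *.
    assert (0 < a) by lra.
    assert (E : (p * p + q * q) / a <= norm2 n v).
    { enough (0 <= norm2 n v - (p * p + q * q) / a) by lra.
      eapply Rle_trans; [exact Hw|]. right. field. lra. }
    apply (Rmult_le_compat_l a) in E; [|lra].
    replace (a * ((p * p + q * q) / a)) with (p * p + q * q) in E by (field; lra). nra.
Qed.

Lemma LeScalar_mono n A l l' : LeScalar n A l -> l <= l' -> LeScalar n A l'.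
Proof. intros H Hl v. specialize (H v). pose proof (norm2_nonneg n v). nra. Qed.

Lemma LeScalar_trace n A : Hermitian n A -> QuadNonneg n A -> LeScalar n A (re (trace n A)).
Proof.
  intros HH HP v. destruct (quad_nonneg_gram_factor n A HH HP) as [W HW].
  rewrite (quad_gram_factor n A W v HW), (re_trace_gram_factor n A W HW), re_Csum.
  rewrite Rmult_comm, <- Rsum_scal. apply Rsum_le; intros r _.
  rewrite Rmult_comm. apply inner_cauchy_schwarz.
Qed.

Lemma quad_nonneg_trace0 n A : Hermitian n A -> QuadNonneg n A -> re (trace n A) = 0 ->
  forall i j, (i < n)%nat -> (j < n)%nat -> A i j = C0.
Proof.
  intros HH HP Ht i j Hi Hj. destruct (quad_nonneg_gram_factor n A HH HP) as [W HW].
  rewrite (re_trace_gram_factor n A W HW) in Ht.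
  rewrite HW by auto. apply Csum_eq0. intros r Hr.
  rewrite (norm2_eq0 n (W r) (Rsum_nonneg_eq0 n _ (fun r _ => norm2_nonneg n (W r)) Ht r Hr) i Hi).
  ring.
Qed.

(** * Completely positive maps in Kraus form *)

Lemma block_div c d i : (i < d)%nat -> ((c * d + i) / d = c)%nat.
Proof. intros H. symmetry. apply (Nat.div_unique _ _ _ i); lia. Qed.
Lemma block_mod c d i : (i < d)%nat -> ((c * d + i) mod d = i)%nat.
Proof. intros H. symmetry. apply (Nat.mod_unique _ _ c); lia. Qed.
Lemma block_decomp p d : (0 < d)%nat -> (p / d * d + p mod d = p)%nat.
Proof. intros. pose proof (Nat.div_mod_eq p d). lia. Qed.
Lemma block_index_bound p n d k : (0 < d)%nat -> (p < n * d)%nat -> (k < d)%nat ->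
  (p / d * d + k < n * d)%nat.
Proof.
  intros Hd Hp Hk. assert (p / d < n)%nat.
  { apply Nat.Div0.div_lt_upper_bound; lia. }
  nia.
Qed.

Lemma Csum_blocks_swap n d (F : nat -> nat -> nat -> C) : (0 < d)%nat ->
  Csum (n * d) (fun p => Csum d (fun k => F (p / d)%nat (p mod d)%nat k)) =
  Csum (n * d) (fun p => Csum d (fun i => F (p / d)%nat i (p mod d)%nat)).
Proof.
  intros Hd. rewrite !Csum_blocks. apply Csum_ext; intros c _.
  rewrite (Csum_ext d _ (fun i => Csum d (fun k => F c i k)))
    by (intros i Hi; rewrite block_div, block_mod; auto).
  rewrite (Csum_ext d (fun i => Csum d (fun i0 => F ((c * d + i) / d)%nat i0 ((c * d + i) mod d)%nat))
                      (fun k => Csum d (fun i => F c i k)))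
    by (intros i Hi; rewrite block_div, block_mod; auto).
  apply Csum_swap.
Qed.

Lemma Csum_swap4 n1 n2 n3 n4 (f : nat -> nat -> nat -> nat -> C) :
  Csum n1 (fun x => Csum n2 (fun y => Csum n3 (fun z => Csum n4 (fun w => f x y z w)))) =
  Csum n3 (fun z => Csum n4 (fun w => Csum n1 (fun x => Csum n2 (fun y => f x y z w)))).
Proof.
  transitivity (Csum n1 (fun x => Csum n3 (fun z => Csum n4 (fun w => Csum n2 (fun y => f x y z w))))).
  { apply Csum_ext; intros x _. rewrite Csum_swap. apply Csum_ext; intros z _. apply Csum_swap. }
  rewrite Csum_swap. apply Csum_ext; intros z _. apply Csum_swap.
Qed.

(* S i j k l = sum_{a,s} K_as(i,k) conj (K_as(j,l)), i.e. E(X) = sum_{a,s} K_as X K_as^*. *)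
Definition KrausForm (d : nat) (S : Superop) (R1 R2 : nat) (K : nat -> nat -> Mat) : Prop :=
  forall i j k l, (i < d)%nat -> (j < d)%nat -> (k < d)%nat -> (l < d)%nat ->
    S i j k l = Csum R1 (fun a => Csum R2 (fun s => Cmul (K a s i k) (Cconj (K a s j l)))).

Lemma ampl_entry n d S X p q : (0 < d)%nat -> (p < n * d)%nat -> (q < n * d)%nat ->
  ampl n d S X p q
  = Csum d (fun k => Csum d (fun l =>
      Cmul (S (p mod d)%nat (q mod d)%nat k l) (X (p / d * d + k)%nat (q / d * d + l)%nat))).
Proof.
  intros Hd Hp Hq. unfold ampl, applyS.
  apply Nat.ltb_lt in Hp. apply Nat.ltb_lt in Hq. rewrite Hp, Hq.
  replace (Nat.ltb (p mod d) d) with true by (symmetry; apply Nat.ltb_lt, Nat.mod_upper_bound; lia).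
  replace (Nat.ltb (q mod d) d) with true by (symmetry; apply Nat.ltb_lt, Nat.mod_upper_bound; lia).
  reflexivity.
Qed.

Section KrausQuad.
Variables (n d R1 R2 : nat) (S : Superop) (K : nat -> nat -> Mat) (X : Mat) (v : Vec).
Hypothesis Hd : (0 < d)%nat.
Hypothesis HK : KrausForm d S R1 R2 K.

Let term a s c i k c' j l : C :=
  Cmul (Cmul (Cconj (v (c * d + i)%nat)) (K a s i k))
       (Cmul (X (c * d + k)%nat (c' * d + l)%nat) (Cmul (Cconj (K a s j l)) (v (c' * d + j)%nat))).

(* the vector (id (x) K_as^* ) v *)
Let kraus_vec a s : Vec :=
  fun p => Csum d (fun i => Cmul (Cconj (K a s i (p mod d)%nat)) (v (p / d * d + i)%nat)).

Lemma quad_ampl_expand : quad (n * d) (ampl n d S X) v =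
  Csum R1 (fun a => Csum R2 (fun s => Csum (n * d) (fun p => Csum (n * d) (fun q =>
    Csum d (fun k => Csum d (fun l => term a s (p / d) (p mod d) k (q / d) (q mod d) l))))))%nat.
Proof.
  unfold quad.
  transitivity (Csum (n * d) (fun p => Csum (n * d) (fun q => Csum d (fun k => Csum d (fun l =>
     Csum R1 (fun a => Csum R2 (fun s => term a s (p / d) (p mod d) k (q / d) (q mod d) l)))))))%nat.
  { apply Csum_ext; intros p Hp; apply Csum_ext; intros q Hq. rewrite ampl_entry by auto.
    rewrite <- Csum_mul_r, <- Csum_mul_l. apply Csum_ext; intros k Hk.
    rewrite <- Csum_mul_r, <- Csum_mul_l. apply Csum_ext; intros l Hl.
    rewrite HK by (auto; apply Nat.mod_upper_bound; lia).
    rewrite <- Csum_mul_r, <- Csum_mul_r, <- Csum_mul_l. apply Csum_ext; intros a _.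
    rewrite <- Csum_mul_r, <- Csum_mul_r, <- Csum_mul_l. apply Csum_ext; intros s _.
    unfold term. rewrite !block_decomp by auto. ring. }
  rewrite (Csum_ext _ _ (fun p => Csum (n * d) (fun q => Csum R1 (fun a => Csum R2 (fun s =>
     Csum d (fun k => Csum d (fun l => term a s (p / d) (p mod d) k (q / d) (q mod d) l)))))))%nat
    by (intros; apply Csum_ext; intros; apply Csum_swap4).
  apply Csum_swap4.
Qed.

Lemma kraus_term_quad a s :
  Csum (n * d) (fun p => Csum (n * d) (fun q => Csum d (fun k => Csum d (fun l =>
    term a s (p / d) (p mod d) k (q / d) (q mod d) l))))%nat = quad (n * d) X (kraus_vec a s).
Proof.
  rewrite (Csum_ext _ _ (fun p => Csum d (fun k => Csum (n * d) (fun q => Csum d (fun l =>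
     term a s (p / d) (p mod d) k (q / d) (q mod d) l))))%nat) by (intros; apply Csum_swap).
  rewrite (Csum_blocks_swap n d
    (fun c i k => Csum (n * d) (fun q => Csum d (fun l => term a s c i k (q / d) (q mod d) l))) Hd).
  rewrite (Csum_ext _ _ (fun p => Csum d (fun i => Csum (n * d) (fun q => Csum d (fun j =>
     term a s (p / d) i (p mod d) (q / d) j (q mod d)))))%nat)
    by (intros p _; apply Csum_ext; intros i _;
        apply (Csum_blocks_swap n d (fun c' j l => term a s (p / d) i (p mod d) c' j l) Hd)).
  unfold quad. apply Csum_ext; intros p Hp. rewrite <- Csum_swap.
  apply Csum_ext; intros q Hq.
  unfold kraus_vec. rewrite Cconj_Csum, <- Csum_mul_r. apply Csum_ext; intros i Hi.
  rewrite <- Csum_mul_l, <- Csum_mul_l. apply Csum_ext; intros j Hj.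
  unfold term. rewrite !block_decomp by auto. rewrite Cconj_mul, Cconj_involutive. ring.
Qed.

Lemma quad_ampl_kraus : quad (n * d) (ampl n d S X) v
  = Csum R1 (fun a => Csum R2 (fun s => quad (n * d) X (kraus_vec a s))).
Proof.
  rewrite quad_ampl_expand. apply Csum_ext; intros a _; apply Csum_ext; intros s _.
  apply kraus_term_quad.
Qed.

End KrausQuad.

Lemma kraus_CP d S R1 R2 K : (0 < d)%nat -> KrausForm d S R1 R2 K -> CP d S.
Proof.
  intros Hd HK n X Hsup [HXH HXP]. split.
  - intros p q Hp Hq. rewrite !ampl_entry by auto. rewrite Cconj_Csum.
    rewrite (Csum_ext d (fun k => Cconj _)
      (fun k => Csum d (fun l => Cconj (Cmul (S (q mod d)%nat (p mod d)%nat k l)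
                                             (X (q / d * d + k)%nat (p / d * d + l)%nat)))))
      by (intros; apply Cconj_Csum).
    rewrite (Csum_swap d d (fun k l => Cconj (Cmul (S (q mod d)%nat (p mod d)%nat k l)
                                                   (X (q / d * d + k)%nat (p / d * d + l)%nat)))). apply Csum_ext; intros k Hk; apply Csum_ext; intros l Hl.
    assert (Hpm : (p mod d < d)%nat) by (apply Nat.mod_upper_bound; lia).
    assert (Hqm : (q mod d < d)%nat) by (apply Nat.mod_upper_bound; lia).
    rewrite Cconj_mul, (HK (p mod d)%nat), (HK (q mod d)%nat) by auto.
    rewrite (HXH (p / d * d + k)%nat (q / d * d + l)%nat) by (apply block_index_bound; auto).
    f_equal. rewrite !Cconj_Csum. apply Csum_ext; intros a _.
    rewrite Cconj_Csum. apply Csum_ext; intros s _.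
    rewrite Cconj_mul, Cconj_involutive. ring.
  - intros v. rewrite (quad_ampl_kraus n d R1 R2 S K X v Hd HK), re_Csum, im_Csum. split.
    + apply Rsum_eq0; intros a _. rewrite im_Csum. apply Rsum_eq0; intros s _. apply HXP.
    + apply Rsum_nonneg; intros a _. rewrite re_Csum. apply Rsum_nonneg; intros s _. apply HXP.
Qed.

(* Measure in the computational basis and prepare [om k] on outcome k. *)
Definition measure_prepare (om : nat -> Mat) : Superop :=
  fun i j k l => if Nat.eqb k l then om k i j else C0.

Lemma applyS_measure_prepare d om X i j : (i < d)%nat -> (j < d)%nat ->
  applyS d (measure_prepare om) X i j = Csum d (fun k => Cmul (om k i j) (X k k)).
Proof.
  intros Hi Hj. unfold applyS. apply Nat.ltb_lt in Hi; apply Nat.ltb_lt in Hj. rewrite Hi, Hj.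
  apply Csum_ext; intros k Hk. unfold measure_prepare.
  rewrite <- (Csum_delta_r d k (fun l => Cmul (om k i j) (X k l)) Hk).
  apply Csum_ext; intros l _. destruct (Nat.eqb k l); ring.
Qed.

Definition IsState (d : nat) (A : Mat) : Prop :=
  Hermitian d A /\ QuadNonneg d A /\ trace d A = C1.

Lemma measure_prepare_CP d om : (0 < d)%nat -> (forall a, (a < d)%nat -> IsState d (om a)) ->
  CP d (measure_prepare om).
Proof.
  intros Hd Hom.
  assert (HW : forall a, exists W, (a < d)%nat -> GramFactor d (om a) W).
  { intros a. destruct (Nat.lt_ge_cases a d) as [Ha|Ha].
    - destruct (Hom a Ha) as [HH [HP _]].
      destruct (quad_nonneg_gram_factor d (om a) HH HP) as [W HW]. exists W; auto.
    - exists (fun _ _ => C0); lia. }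
  destruct (choice _ HW) as [W HWs].
  apply (kraus_CP d _ d d (fun a s i k => if Nat.eqb k a then W a s i else C0) Hd).
  intros i j k l Hi Hj Hk Hl.
  rewrite (Csum_ext d _ (fun a => if Nat.eqb a k then (if Nat.eqb a l then om a i j else C0) else C0)).
  - unfold measure_prepare. rewrite (Csum_delta d k (fun a => if Nat.eqb a l then om a i j else C0) Hk).
    destruct (Nat.eqb_spec k l), (Nat.eqb_spec l k); auto; lia.
  - intros a Ha. rewrite (Nat.eqb_sym a k), (Nat.eqb_sym a l).
    destruct (Nat.eqb_spec k a), (Nat.eqb_spec l a).
    + subst. rewrite HWs by auto. reflexivity.
    + apply Csum_eq0; intros; rewrite Cconj_0; ring.
    + apply Csum_eq0; intros; ring.
    + apply Csum_eq0; intros; ring.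
Qed.

Lemma measure_prepare_channel d om : (0 < d)%nat ->
  (forall a, (a < d)%nat -> IsState d (om a)) ->
  (forall i j, (i < d)%nat -> (j < d)%nat -> Csum d (fun k => om k i j) = Idm d i j) ->
  UnitalChannel d (measure_prepare om).
Proof.
  intros Hd Hom Hsum. split; [|split].
  - apply measure_prepare_CP; auto.
  - intros X. unfold trace.
    rewrite (Csum_ext d _ (fun i => Csum d (fun k => Cmul (om k i i) (X k k))))
      by (intros; apply applyS_measure_prepare; auto).
    rewrite Csum_swap. apply Csum_ext; intros k Hk. rewrite Csum_mul_r.
    destruct (Hom k Hk) as [_ [_ Ht]]. unfold trace in Ht. rewrite Ht. ring.
  - intros i j. destruct (Nat.ltb_spec i d), (Nat.ltb_spec j d).
    + rewrite applyS_measure_prepare, <- Hsum by auto. apply Csum_ext; intros k Hk.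
      unfold Idm. rewrite Nat.eqb_refl. apply Nat.ltb_lt in Hk. rewrite Hk. simpl. ring.
    + unfold applyS, Idm. replace (Nat.ltb j d) with false by (symmetry; apply Nat.ltb_ge; lia).
      rewrite Bool.andb_false_r. destruct (Nat.ltb i d), (Nat.eqb_spec i j); simpl; auto. lia.
    + unfold applyS, Idm. replace (Nat.ltb i d) with false by (symmetry; apply Nat.ltb_ge; lia).
      reflexivity.
    + unfold applyS, Idm. replace (Nat.ltb i d) with false by (symmetry; apply Nat.ltb_ge; lia).
      reflexivity.
Qed.

(** * Which states a unital channel can produce from [PiK k] *)

Definition diag_mat (d : nat) (f : nat -> R) : Mat :=
  fun i j => if (Nat.ltb i d && Nat.eqb i j)%bool then RtoC (f i) else C0.

Lemma diag_mat_supported d f : supported d (diag_mat d f).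
Proof.
  intros i j Hij. unfold diag_mat.
  destruct (Nat.ltb_spec i d), (Nat.eqb_spec i j); simpl; auto. lia.
Qed.
Lemma diag_mat_hermitian d f : Hermitian d (diag_mat d f).
Proof.
  intros i j Hi Hj. unfold diag_mat. apply Nat.ltb_lt in Hi; apply Nat.ltb_lt in Hj.
  rewrite Hi, Hj, Nat.eqb_sym. simpl.
  destruct (Nat.eqb_spec j i); [subst; rewrite Cconj_RtoC|rewrite Cconj_0]; reflexivity.
Qed.
Lemma quad_diag_mat d f v :
  quad d (diag_mat d f) v = Csum d (fun i => Cmul (RtoC (f i)) (Cmul (Cconj (v i)) (v i))).
Proof.
  rewrite quad_inner. unfold inner. apply Csum_ext; intros i Hi. unfold mulmv, diag_mat.
  apply Nat.ltb_lt in Hi as Hi'. rewrite Hi'. simpl.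
  rewrite (Csum_ext d _ (fun j => if Nat.eqb i j then Cmul (RtoC (f i)) (v j) else C0))
    by (intros j _; destruct (Nat.eqb i j); ring).
  rewrite Csum_delta_r by auto. ring.
Qed.
Lemma diag_mat_psd d f : (forall i, (i < d)%nat -> 0 <= f i) -> PSD d (diag_mat d f).
Proof.
  intros Hf. split; [apply diag_mat_hermitian|]. intros v.
  rewrite quad_diag_mat, re_Csum, im_Csum. split.
  - apply Rsum_eq0; intros. destruct (v i); simpl; ring.
  - apply Rsum_nonneg; intros i Hi. specialize (Hf i Hi). destruct (v i); simpl; nra.
Qed.
Lemma trace_diag_mat d f : trace d (diag_mat d f) = Csum d (fun i => RtoC (f i)).
Proof.
  unfold trace. apply Csum_ext; intros i Hi. unfold diag_mat.
  apply Nat.ltb_lt in Hi. rewrite Hi, Nat.eqb_refl. reflexivity.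
Qed.

Lemma Idm_diag_mat d : Idm d = diag_mat d (fun _ => 1).
Proof. reflexivity. Qed.
Lemma quad_Idm d v : quad d (Idm d) v = RtoC (norm2 d v).
Proof.
  rewrite Idm_diag_mat, quad_diag_mat, <- inner_self. unfold inner.
  apply Csum_ext; intros; Csolve.
Qed.
Lemma trace_Idm d : trace d (Idm d) = RtoC (INR d).
Proof. rewrite Idm_diag_mat, trace_diag_mat, Csum_const. Csolve. Qed.

Lemma PiK_density d : (1 <= d)%nat -> Density d (PiK d).
Proof.
  intros Hd. assert (Hd0 : 0 < INR d) by (apply lt_0_INR; lia).
  replace (PiK d) with (diag_mat d (fun _ => / INR d)) by reflexivity.
  split; [apply diag_mat_supported|split].
  - apply diag_mat_psd. intros; left; apply Rinv_0_lt_compat; auto.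
  - rewrite trace_diag_mat, Csum_const. apply C_ext; simpl; field; lra.
Qed.

Definition IdMinus (d k : nat) (A : Mat) : Mat :=
  fun i j => Cadd (Cmul C1 (Idm d i j)) (Cmul (RtoC (- INR k)) (A i j)).

Lemma IdMinus_hermitian d k A : Hermitian d A -> Hermitian d (IdMinus d k A).
Proof.
  intros HA i j Hi Hj. unfold IdMinus.
  rewrite Cconj_add, !Cconj_mul, Cconj_RtoC, Cconj_1, Idm_diag_mat,
    (diag_mat_hermitian d _ i j), (HA i j) by auto.
  reflexivity.
Qed.
Lemma re_quad_IdMinus d k A v :
  re (quad d (IdMinus d k A) v) = norm2 d v - INR k * re (quad d A v).
Proof. unfold IdMinus. rewrite quad_comb, quad_Idm. simpl. ring. Qed.
Lemma trace_IdMinus d k A : trace d (IdMinus d k A) = Csub (RtoC (INR d)) (Cmul (RtoC (INR k)) (trace d A)).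
Proof. unfold IdMinus. rewrite trace_comb, trace_Idm, RtoC_opp. ring. Qed.

Lemma IdMinus_quad_nonneg_iff d k A : (1 <= k)%nat ->
  QuadNonneg d (IdMinus d k A) <-> LeScalar d A (/ INR k).
Proof.
  intros Hk. assert (Hk0 : 0 < INR k) by (apply lt_0_INR; lia).
  unfold QuadNonneg, LeScalar. setoid_rewrite re_quad_IdMinus.
  split; intros H v; specialize (H v).
  - apply (Rmult_le_reg_l (INR k)); auto. rewrite <- Rmult_assoc, Rinv_r, Rmult_1_l by lra. lra.
  - apply (Rmult_le_compat_l (INR k)) in H; [|lra].
    rewrite <- Rmult_assoc, Rinv_r, Rmult_1_l in H by lra. lra.
Qed.

(* The channel sending [PiK k] to sg prepares sg on outcomes a < k, and on the
   other outcomes the state that makes it unital. *)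
Definition complement_state (d k : nat) (sg : Mat) : Mat :=
  fun i j => Cmul (RtoC (/ (INR d - INR k))) (IdMinus d k sg i j).
Definition fill_prepare (d k : nat) (sg : Mat) (a : nat) : Mat :=
  if Nat.ltb a k then sg else complement_state d k sg.

Section FromPiK.
Variables (d k : nat) (sg : Mat).
Hypothesis (Hk : (1 <= k <= d)%nat) (Hsg : Density d sg) (HL : LeScalar d sg (/ INR k)).

Let tau : Mat := complement_state d k sg.
Let om : nat -> Mat := fill_prepare d k sg.

Let Hk0 : 0 < INR k. Proof. apply lt_0_INR; lia. Qed.
Let Hsg_herm : Hermitian d sg. Proof. apply Hsg. Qed.
Let Hsg_tr : trace d sg = C1. Proof. apply Hsg. Qed.
Let HIdMinus : QuadNonneg d (IdMinus d k sg). Proof. apply IdMinus_quad_nonneg_iff; lia || auto. Qed.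

Lemma complement_state_is_state : (k < d)%nat -> IsState d tau.
Proof.
  intros Hkd. assert (Hkd' : INR k < INR d) by (apply lt_INR; lia).
  split; [|split].
  - intros i j Hi Hj. unfold tau, complement_state.
    rewrite Cconj_mul, Cconj_RtoC, (IdMinus_hermitian d k sg Hsg_herm i j) by auto. reflexivity.
  - intros v. unfold tau, complement_state. rewrite quad_scale.
    pose proof (HIdMinus v) as Hq. destruct (quad d (IdMinus d k sg) v) as [p q]. simpl in *.
    replace (/ (INR d - INR k) * p - 0 * q) with (/ (INR d - INR k) * p) by ring.
    apply Rmult_le_pos; [left; apply Rinv_0_lt_compat; lra|auto].
  - unfold trace, tau, complement_state. rewrite Csum_mul_l. fold (trace d (IdMinus d k sg)).
    rewrite trace_IdMinus, Hsg_tr. apply C_ext; simpl; field; lra.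
Qed.

(* For k = d the bound forces sg = Id / d, as Id - d sg is positive with zero trace. *)
Lemma LeScalar_uniform : k = d -> forall i j, (i < d)%nat -> (j < d)%nat ->
  Cmul (RtoC (INR d)) (sg i j) = Idm d i j.
Proof.
  intros Hkd i j Hi Hj. subst k.
  assert (Htr0 : re (trace d (IdMinus d d sg)) = 0) by (rewrite trace_IdMinus, Hsg_tr; simpl; ring).
  assert (E := quad_nonneg_trace0 d (IdMinus d d sg) (IdMinus_hermitian d d sg Hsg_herm)
                 HIdMinus Htr0 i j Hi Hj).
  unfold IdMinus in E. rewrite RtoC_opp in E.
  transitivity (Csub (Cmul C1 (Idm d i j))
                     (Cadd (Cmul C1 (Idm d i j)) (Cmul (Copp (RtoC (INR d))) (sg i j)))); [ring|].
  rewrite E; ring.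
Qed.

Lemma prepared_states a : (a < d)%nat -> IsState d (om a).
Proof.
  intros Ha. unfold om, fill_prepare. destruct (Nat.ltb_spec a k).
  - split; [auto|split; [intros v; apply Hsg|auto]].
  - apply complement_state_is_state; lia.
Qed.

Lemma prepared_states_sum i j : (i < d)%nat -> (j < d)%nat ->
  Csum d (fun a => om a i j) = Idm d i j.
Proof.
  intros Hi Hj. unfold om, fill_prepare.
  rewrite (Csum_ext d _ (fun a => if Nat.ltb a k then sg i j else tau i j))
    by (intros a _; destruct (Nat.ltb a k); auto).
  rewrite (Csum_prefix_const d k (sg i j) (fun _ => tau i j)) by lia.
  destruct (Nat.eq_dec k d) as [Hkd|Hne].
  - replace (d - k)%nat with 0%nat by lia. simpl Csum.
    rewrite <- (LeScalar_uniform Hkd) by auto. rewrite Hkd. ring.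
  - assert (Hkd : INR k < INR d) by (apply lt_INR; lia).
    rewrite Csum_const, minus_INR by lia. unfold tau, complement_state, IdMinus.
    apply C_ext; simpl; field; lra.
Qed.

Lemma measure_prepare_PiK : applyS d (measure_prepare om) (PiK k) = sg.
Proof.
  destruct Hsg as [Hsup _].
  extensionality i. extensionality j.
  destruct (Nat.ltb_spec i d), (Nat.ltb_spec j d).
  - rewrite applyS_measure_prepare by auto. unfold om, fill_prepare.
    rewrite (Csum_ext d _ (fun a => if Nat.ltb a k then Cmul (sg i j) (RtoC (/ INR k)) else C0)).
    + rewrite (Csum_prefix_const d k _ (fun _ => C0)) by lia.
      rewrite Csum_eq0 by auto. apply C_ext; simpl; field; lra.
    + intros a Ha. unfold PiK. rewrite Nat.eqb_refl. destruct (Nat.ltb a k); simpl; ring.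
  - unfold applyS. replace (Nat.ltb j d) with false by (symmetry; apply Nat.ltb_ge; lia).
    rewrite Bool.andb_false_r. symmetry; apply Hsup; lia.
  - unfold applyS. replace (Nat.ltb i d) with false by (symmetry; apply Nat.ltb_ge; lia).
    symmetry; apply Hsup; lia.
  - unfold applyS. replace (Nat.ltb i d) with false by (symmetry; apply Nat.ltb_ge; lia).
    symmetry; apply Hsup; lia.
Qed.

End FromPiK.

Lemma unital_channel_from_PiK d k sg : (1 <= k <= d)%nat -> Density d sg ->
  LeScalar d sg (/ INR k) -> exists S, UnitalChannel d S /\ applyS d S (PiK k) = sg.
Proof.
  intros Hk Hsg HL. exists (measure_prepare (fill_prepare d k sg)). split.
  - apply measure_prepare_channel; [lia| |].
    + intros; apply prepared_states; auto.
    + intros; apply prepared_states_sum; auto.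
  - apply measure_prepare_PiK; auto.
Qed.

Lemma applyS_comb d S A B a b i j :
  applyS d S (fun k l => Cadd (Cmul a (A k l)) (Cmul b (B k l))) i j
  = Cadd (Cmul a (applyS d S A i j)) (Cmul b (applyS d S B i j)).
Proof.
  unfold applyS. destruct (Nat.ltb i d && Nat.ltb j d)%bool; [|ring].
  rewrite <- !Csum_mul_l, <- Csum_add. apply Csum_ext; intros k _.
  rewrite <- !Csum_mul_l, <- Csum_add. apply Csum_ext; intros; ring.
Qed.

Lemma ampl_1 d S X p q : (p < d)%nat -> (q < d)%nat -> ampl 1 d S X p q = applyS d S X p q.
Proof.
  intros Hp Hq. rewrite ampl_entry by lia.
  rewrite (Nat.div_small p d), (Nat.div_small q d), (Nat.mod_small p d), (Nat.mod_small q d) by lia.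
  unfold applyS. apply Nat.ltb_lt in Hp; apply Nat.ltb_lt in Hq. rewrite Hp, Hq. reflexivity.
Qed.

(* Complete positivity is only used through positivity, applied to Id - k PiK k >= 0. *)
Lemma unital_channel_image_PiK d k S : (1 <= d)%nat -> (1 <= k)%nat -> UnitalChannel d S ->
  LeScalar d (applyS d S (PiK k)) (/ INR k).
Proof.
  intros Hd Hk [HCP [_ HU]]. apply IdMinus_quad_nonneg_iff; auto.
  set (M := diag_mat d (fun i => if Nat.ltb i k then 0 else 1)).
  assert (HM : forall i j, (i < d)%nat -> (j < d)%nat -> M i j = IdMinus d k (PiK k) i j).
  { assert (0 < INR k) by (apply lt_0_INR; lia).
    intros i j Hi Hj. unfold M, diag_mat, IdMinus, Idm, PiK. apply Nat.ltb_lt in Hi. rewrite Hi.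
    destruct (Nat.eqb i j), (Nat.ltb i k); simpl; apply C_ext; simpl; try field; lra. }
  assert (HPM : PSD (1 * d) (ampl 1 d S M)).
  { apply HCP; rewrite Nat.mul_1_l; [apply diag_mat_supported|].
    apply diag_mat_psd. intros i _. destruct (Nat.ltb i k); lra. }
  rewrite Nat.mul_1_l in HPM.
  assert (HE : forall i j, (i < d)%nat -> (j < d)%nat ->
            IdMinus d k (applyS d S (PiK k)) i j = ampl 1 d S M i j).
  { intros i j Hi Hj. rewrite ampl_1 by auto. unfold IdMinus at 1.
    rewrite <- (HU i j), <- applyS_comb. unfold applyS.
    apply Nat.ltb_lt in Hi; apply Nat.ltb_lt in Hj. rewrite Hi, Hj.
    apply Csum_ext; intros k0 Hk0; apply Csum_ext; intros l Hl. rewrite HM; auto. }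
  intros v. rewrite (quad_ext d _ _ v v HE) by auto. apply HPM.
Qed.

(** * Sequential compactness of bounded sets of matrices *)

Definition StrictIncr (phi : nat -> nat) : Prop := forall n, (phi n < phi (S n))%nat.

Lemma StrictIncr_ge phi : StrictIncr phi -> forall n, (n <= phi n)%nat.
Proof. intros H n; induction n; [lia|]. specialize (H n); lia. Qed.
Lemma StrictIncr_mono phi : StrictIncr phi -> forall n m, (n <= m)%nat -> (phi n <= phi m)%nat.
Proof. intros H n m Hnm; induction Hnm; auto. specialize (H m); lia. Qed.
Lemma StrictIncr_comp phi psi : StrictIncr phi -> StrictIncr psi -> StrictIncr (fun n => phi (psi n)).
Proof.
  intros H1 H2 n. pose proof (StrictIncr_mono phi H1 (S (psi n)) (psi (S n)) (H2 n)).
  specialize (H1 (psi n)). lia.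
Qed.
Lemma Un_cv_subseq u l phi : StrictIncr phi -> Un_cv u l -> Un_cv (fun n => u (phi n)) l.
Proof.
  intros Hp Hu e He. destruct (Hu e He) as [N HN]. exists N. intros n Hn.
  apply HN. pose proof (StrictIncr_ge phi Hp n). lia.
Qed.
Lemma Un_cv_const c : Un_cv (fun _ => c) c.
Proof. intros e He. exists O. intros. unfold Rdist. rewrite Rminus_diag, Rabs_R0. auto. Qed.
Lemma Un_cv_ext u v l : (forall n, u n = v n) -> Un_cv u l -> Un_cv v l.
Proof. intros H Hu e He. destruct (Hu e He) as [N HN]. exists N. intros n Hn. rewrite <- H. auto. Qed.

Lemma inv_succ_small e : 0 < e -> exists N, forall n, (N <= n)%nat -> / (INR n + 1) < e.
Proof.
  intros He. destruct (archimed_cor1 e He) as [N [HN HN0]]. exists N. intros n Hn.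
  apply Rle_lt_trans with (/ INR N); auto. apply Rinv_le_contravar.
  - apply lt_0_INR; lia.
  - apply le_INR in Hn. lra.
Qed.
Lemma Un_cv_inv_succ : Un_cv (fun n => / (INR n + 1)) 0.
Proof.
  intros e He. destruct (inv_succ_small e He) as [N HN]. exists N. intros n Hn.
  unfold Rdist. rewrite Rminus_0_r, Rabs_right; auto.
  left; apply Rinv_0_lt_compat; pose proof (pos_INR n); lra.
Qed.

Lemma bolzano_weierstrass (u : nat -> R) M : (forall n, Rabs (u n) <= M) ->
  exists phi l, StrictIncr phi /\ Un_cv (fun n => u (phi n)) l.
Proof.
  intros HM.
  destruct (Bolzano_Weierstrass u (fun c => - M <= c <= M) (compact_P3 (- M) M)) as [l Hl].
  { intros n. specialize (HM n). revert HM; unfold Rabs; destruct (Rcase_abs (u n)); lra. }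
  assert (Hpick : forall N k : nat, {p : nat | (N <= p)%nat /\ Rabs (u p - l) < / (INR k + 1)}).
  { intros N k. apply constructive_indefinite_description.
    assert (Hpos : 0 < / (INR k + 1)) by (apply Rinv_0_lt_compat; pose proof (pos_INR k); lra).
    destruct (Hl (disc l (mkposreal _ Hpos)) N) as [p [Hp1 Hp2]].
    - exists (mkposreal _ Hpos). intros y Hy; auto.
    - exists p; split; auto. }
  set (g := fun N k => proj1_sig (Hpick N k)).
  assert (Hg : forall N k, (N <= g N k)%nat /\ Rabs (u (g N k) - l) < / (INR k + 1))
    by (intros; unfold g; apply proj2_sig).
  set (phi := fix phi n := match n with O => g O O | S m => g (S (phi m)) (S m) end).
  exists phi, l. split.
  - intros n. simpl. destruct (Hg (S (phi n)) (S n)). lia.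
  - intros e He. destruct (inv_succ_small e He) as [N HN]. exists N. intros n Hn. unfold Rdist.
    apply Rlt_trans with (/ (INR n + 1)); auto.
    destruct n; simpl phi; apply Hg.
Qed.

Lemma bolzano_weierstrass_list (X : Type) (fs : list (X -> R)) (x : nat -> X) M :
  (forall f n, In f fs -> Rabs (f (x n)) <= M) ->
  exists phi, StrictIncr phi /\ forall f, In f fs -> exists l, Un_cv (fun n => f (x (phi n))) l.
Proof.
  induction fs as [|f fs IH]; intros HM.
  - exists (fun n => n). split; [intros n; lia|]. intros f [].
  - destruct IH as [phi [Hphi Hc]]. { intros; apply HM; simpl; auto. }
    destruct (bolzano_weierstrass (fun n => f (x (phi n))) M) as [psi [l [Hpsi Hl]]].
    { intros; apply HM; simpl; auto. }
    exists (fun n => phi (psi n)). split; [apply StrictIncr_comp; auto|].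
    intros g [<-|Hg]; [exists l; auto|].
    destruct (Hc g Hg) as [l' Hl']. exists l'. apply (Un_cv_subseq (fun n => g (x (phi n)))); auto.
Qed.

Definition Ccv (z : nat -> C) (w : C) : Prop :=
  Un_cv (fun n => re (z n)) (re w) /\ Un_cv (fun n => im (z n)) (im w).

Lemma Ccv_const c : Ccv (fun _ => c) c.
Proof. split; apply Un_cv_const. Qed.
Lemma Ccv_ext z1 z2 w : (forall n, z1 n = z2 n) -> Ccv z1 w -> Ccv z2 w.
Proof. intros H [a b]; split; eapply Un_cv_ext; eauto; intros; simpl; rewrite H; auto. Qed.
Lemma Ccv_unique z w1 w2 : Ccv z w1 -> Ccv z w2 -> w1 = w2.
Proof. intros [a b] [c e]. apply C_ext; eapply UL_sequence; eauto. Qed.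
Lemma Ccv_add z1 z2 w1 w2 : Ccv z1 w1 -> Ccv z2 w2 ->
  Ccv (fun n => Cadd (z1 n) (z2 n)) (Cadd w1 w2).
Proof. intros [a b] [c e]; split; simpl; apply CV_plus; auto. Qed.
Lemma Ccv_mul z1 z2 w1 w2 : Ccv z1 w1 -> Ccv z2 w2 ->
  Ccv (fun n => Cmul (z1 n) (z2 n)) (Cmul w1 w2).
Proof. intros [a b] [c e]; split; simpl; [apply CV_minus|apply CV_plus]; apply CV_mult; auto. Qed.
Lemma Ccv_conj z w : Ccv z w -> Ccv (fun n => Cconj (z n)) (Cconj w).
Proof.
  intros [a b]; split; simpl; auto.
  apply (Un_cv_ext (opp_seq (fun n => im (z n)))); [reflexivity|apply CV_opp; auto].
Qed.
Lemma Ccv_Csum m (z : nat -> nat -> C) (w : nat -> C) :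
  (forall i, (i < m)%nat -> Ccv (fun n => z n i) (w i)) -> Ccv (fun n => Csum m (z n)) (Csum m w).
Proof.
  induction m; intros H; simpl; [apply Ccv_const|].
  apply (Ccv_add (fun n => Csum m (z n)) (fun n => z n m)); [apply IHm; intros|]; apply H; lia.
Qed.
Lemma Ccv_quad m (A : nat -> Mat) (Al : Mat) (v : nat -> Vec) (vl : Vec) :
  (forall i j, (i < m)%nat -> (j < m)%nat -> Ccv (fun n => A n i j) (Al i j)) ->
  (forall i, (i < m)%nat -> Ccv (fun n => v n i) (vl i)) ->
  Ccv (fun n => quad m (A n) (v n)) (quad m Al vl).
Proof.
  intros HA Hv. unfold quad. apply Ccv_Csum; intros i Hi.
  apply (Ccv_Csum m (fun n j => Cmul (Cconj (v n i)) (Cmul (A n i j) (v n j)))); intros j Hj.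
  apply (Ccv_mul (fun n => Cconj (v n i))); [apply Ccv_conj; auto|].
  apply (Ccv_mul (fun n => A n i j)); auto.
Qed.
Lemma Un_cv_norm2 m (v : nat -> Vec) (vl : Vec) :
  (forall i, (i < m)%nat -> Ccv (fun n => v n i) (vl i)) -> Un_cv (fun n => norm2 m (v n)) (norm2 m vl).
Proof.
  intros Hv. apply (Ccv_Csum m (fun n i => Cmul (Cconj (v n i)) (v n i))).
  intros i Hi. apply (Ccv_mul (fun n => Cconj (v n i))); [apply Ccv_conj|]; auto.
Qed.

Definition limit (u : nat -> R) : R := epsilon (inhabits 0) (fun l => Un_cv u l).
Lemma limit_spec u l : Un_cv u l -> Un_cv u (limit u).
Proof. intros H. unfold limit. apply epsilon_spec. exists l; auto. Qed.

Lemma mat_seq_compact d (A : nat -> Mat) M :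
  (forall n i j, (i < d)%nat -> (j < d)%nat -> Rabs (re (A n i j)) <= M /\ Rabs (im (A n i j)) <= M) ->
  exists phi Al, StrictIncr phi /\
    forall i j, (i < d)%nat -> (j < d)%nat -> Ccv (fun n => A (phi n) i j) (Al i j).
Proof.
  intros HM.
  set (fs := flat_map (fun i => map (fun j (B : Mat) => re (B i j)) (seq 0 d)
                                 ++ map (fun j (B : Mat) => im (B i j)) (seq 0 d)) (seq 0 d)).
  assert (Hfs : forall i j, (i < d)%nat -> (j < d)%nat ->
            In (fun B : Mat => re (B i j)) fs /\ In (fun B : Mat => im (B i j)) fs).
  { intros i j Hi Hj. unfold fs. split; apply in_flat_map; exists i; (split; [apply in_seq; lia|]);
      apply in_or_app; [left|right]; apply in_map_iff; exists j; (split; [auto|apply in_seq; lia]). }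
  destruct (bolzano_weierstrass_list Mat fs A M) as [phi [Hphi Hc]].
  { intros f n Hf. unfold fs in Hf. apply in_flat_map in Hf. destruct Hf as [i [Hi Hf]].
    apply in_seq in Hi. apply in_app_or in Hf.
    destruct Hf as [Hf|Hf]; apply in_map_iff in Hf; destruct Hf as [j [<- Hj]]; apply in_seq in Hj;
      destruct (HM n i j); try lia; auto. }
  exists phi, (fun i j => mkC (limit (fun n => re (A (phi n) i j))) (limit (fun n => im (A (phi n) i j)))).
  split; auto. intros i j Hi Hj. destruct (Hfs i j Hi Hj) as [Hre Him]. split; simpl.
  - destruct (Hc _ Hre) as [l Hl]. apply limit_spec with l; auto.
  - destruct (Hc _ Him) as [l Hl]. apply limit_spec with l; auto.
Qed.

Lemma vec_seq_compact d (v : nat -> Vec) M : (0 < d)%nat ->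
  (forall n i, (i < d)%nat -> Rabs (re (v n i)) <= M /\ Rabs (im (v n i)) <= M) ->
  exists phi w, StrictIncr phi /\ forall i, (i < d)%nat -> Ccv (fun n => v (phi n) i) (w i).
Proof.
  intros Hd HM. destruct (mat_seq_compact d (fun n i j => v n i) M) as [phi [Al [Hphi Hc]]].
  { intros; apply HM; lia. }
  exists phi, (fun i => Al i O). split; [auto|]. intros i Hi. apply (Hc i O); lia.
Qed.

Lemma Un_cv_Rsum m (f : nat -> nat -> R) (g : nat -> R) :
  (forall i, (i < m)%nat -> Un_cv (fun n => f n i) (g i)) -> Un_cv (fun n => Rsum m (f n)) (Rsum m g).
Proof.
  induction m; intros H; simpl; [apply Un_cv_const|].
  apply (CV_plus (fun n => Rsum m (f n)) (fun n => f n m)); [apply IHm; intros|]; apply H; lia.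
Qed.
Lemma Un_cv_dist_0 u l : Un_cv u l -> Un_cv (fun n => Rabs (l - u n)) 0.
Proof.
  intros H e He. destruct (H e He) as [N HN]. exists N. intros n Hn. specialize (HN n Hn).
  unfold Rdist in *. rewrite Rminus_0_r, Rabs_Rabsolu, Rabs_minus_sym. auto.
Qed.

(** * The largest eigenvalue of a density matrix *)

Lemma sq_le_1_Rabs x : x * x <= 1 -> Rabs x <= 1.
Proof. intros H. apply Rabs_le. split; nra. Qed.

Lemma unit_vec_coord_bound n v i : norm2 n v = 1 -> (i < n)%nat ->
  Rabs (re (v i)) <= 1 /\ Rabs (im (v i)) <= 1.
Proof.
  intros Hv Hi. rewrite norm2_sum in Hv.
  pose proof (Rsum_term_le n _ i (fun k _ => Cnorm2_nonneg (v k)) Hi). cbv beta in H.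
  split; apply sq_le_1_Rabs; nra.
Qed.

Definition vscale (r : R) (u : Vec) : Vec := fun i => Cmul (RtoC r) (u i).

Lemma re_quad_vscale n A r u : re (quad n A (vscale r u)) = r * r * re (quad n A u).
Proof.
  replace (quad n A (vscale r u)) with (Cmul (RtoC (r * r)) (quad n A u)).
  - simpl; ring.
  - unfold quad, vscale. rewrite <- Csum_mul_l. apply Csum_ext; intros.
    rewrite <- Csum_mul_l. apply Csum_ext; intros. rewrite Cconj_mul, Cconj_RtoC; Csolve.
Qed.
Lemma norm2_vscale n r u : norm2 n (vscale r u) = r * r * norm2 n u.
Proof.
  rewrite !norm2_sum, <- Rsum_scal. apply Rsum_ext; intros. unfold vscale.
  destruct (u i); simpl; ring.
Qed.

Lemma LeScalar_of_unit n A l : (forall v, norm2 n v = 1 -> re (quad n A v) <= l) -> LeScalar n A l.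
Proof.
  intros H u. pose proof (norm2_nonneg n u) as Ha. destruct (Req_dec (norm2 n u) 0) as [H0|H0].
  - rewrite (quad_ext n A A u (fun _ => C0)); [| reflexivity | exact (norm2_eq0 n u H0)].
    unfold quad. rewrite Csum_eq0, H0; [simpl; lra|].
    intros; apply Csum_eq0; intros; rewrite Cconj_0; ring.
  - set (a := norm2 n u) in *. set (r := / sqrt a).
    assert (Hs : 0 < sqrt a) by (apply sqrt_lt_R0; lra).
    assert (Hr : r * r * a = 1) by (unfold r; rewrite <- Rinv_mult, sqrt_sqrt by lra; field; lra).
    specialize (H (vscale r u)). rewrite norm2_vscale, re_quad_vscale in H. specialize (H Hr).
    assert (Hrr : 0 < r * r) by (unfold r; apply Rmult_lt_0_compat; apply Rinv_0_lt_compat; lra).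
    apply (Rmult_le_compat_l a) in H; [|lra].
    replace (a * (r * r * re (quad n A u))) with (r * r * a * re (quad n A u)) in H by ring.
    rewrite Hr in H. lra.
Qed.

Lemma IsEig_le d A l m : LeScalar d A l -> IsEig d A m -> m <= l.
Proof.
  intros HL [u [[i [Hi Hu]] He]].
  assert (Hp : 0 < norm2 d u).
  { destruct (norm2_nonneg d u) as [|H0]; auto. exfalso. apply Hu. apply (norm2_eq0 d u); auto. }
  specialize (HL u). rewrite quad_inner in HL.
  rewrite (inner_ext d u u (mulmv d A u) (fun i => Cmul (RtoC m) (u i))) in HL
    by (auto; intros; apply He; auto).
  unfold inner in HL.
  rewrite (Csum_ext d _ (fun i => Cmul (RtoC m) (Cmul (Cconj (u i)) (u i)))) in HL by (intros; ring).
  rewrite Csum_mul_l in HL. fold (inner d u u) in HL. rewrite inner_self in HL. simpl in HL.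
  apply (Rmult_le_reg_r (norm2 d u)); auto. lra.
Qed.

Lemma LambdaMax_unique d A l1 l2 : LambdaMax d A l1 -> LambdaMax d A l2 -> l1 = l2.
Proof. intros [E1 M1] [E2 M2]. apply Rle_antisym; auto. Qed.

Lemma quad_max_attained d A c : (0 < d)%nat -> LeScalar d A c ->
  exists w, norm2 d w = 1 /\ LeScalar d A (re (quad d A w)).
Proof.
  intros Hd Hc. set (Q := fun v => re (quad d A v)).
  set (E := fun x => exists v, norm2 d v = 1 /\ x = Q v).
  destruct (completeness E) as [lam [Hub Hlub]].
  { exists c. intros x [v [Hv ->]]. unfold Q. specialize (Hc v). rewrite Hv in Hc. lra. }
  { exists (Q (basis_vec O C1)), (basis_vec O C1). split; auto. apply norm2_basis_vec; lia. }
  assert (Hex : forall n : nat, exists v, norm2 d v = 1 /\ lam - / (INR n + 1) < Q v).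
  { intros n. apply NNPP. intros Hno.
    assert (0 < / (INR n + 1)) by (apply Rinv_0_lt_compat; pose proof (pos_INR n); lra).
    enough (lam <= lam - / (INR n + 1)) by lra.
    apply Hlub. intros x [v [Hv ->]]. apply Rnot_lt_le. intros Hlt. apply Hno. exists v; auto. }
  destruct (choice _ Hex) as [vs Hvs].
  destruct (vec_seq_compact d vs 1 Hd) as [phi [w [Hphi Hw]]].
  { intros n i Hi. apply (unit_vec_coord_bound d); [apply Hvs|auto]. }
  assert (Hnw : norm2 d w = 1).
  { apply (UL_sequence (fun n => norm2 d (vs (phi n)))); [apply Un_cv_norm2; auto|].
    apply (Un_cv_ext (fun _ => 1)); [intros; symmetry; apply Hvs|apply Un_cv_const]. }
  assert (HQw : Q w = lam).
  { apply (UL_sequence (fun n => Q (vs (phi n)))).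
    - apply (Ccv_quad d (fun _ => A) A (fun n => vs (phi n)) w); auto. intros; apply Ccv_const.
    - intros e He. destruct (inv_succ_small e He) as [N HN]. exists N. intros n Hn. unfold Rdist.
      assert (HQl : Q (vs (phi n)) <= lam) by (apply Hub; exists (vs (phi n)); split; auto; apply Hvs).
      destruct (Hvs (phi n)) as [_ Hl].
      assert (/ (INR (phi n) + 1) <= / (INR n + 1)).
      { apply Rinv_le_contravar; [pose proof (pos_INR n); lra|].
        apply Rplus_le_compat_r, le_INR, StrictIncr_ge; auto. }
      specialize (HN n Hn). rewrite Rabs_left1 by lra. lra. }
  exists w. split; auto. fold (Q w). rewrite HQw.
  apply LeScalar_of_unit. intros v Hv. apply Hub. exists v; auto.
Qed.

Lemma mulmv_comb_mat n A B a b v i :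
  mulmv n (fun i j => Cadd (Cmul a (A i j)) (Cmul b (B i j))) v i
  = Cadd (Cmul a (mulmv n A v i)) (Cmul b (mulmv n B v i)).
Proof. unfold mulmv. rewrite <- !Csum_mul_l, <- Csum_add. apply Csum_ext; intros; ring. Qed.
Lemma mulmv_Idm d v i : (i < d)%nat -> mulmv d (Idm d) v i = v i.
Proof.
  intros Hi. unfold mulmv, Idm. apply Nat.ltb_lt in Hi as Hi'. rewrite Hi'. simpl.
  rewrite <- (Csum_delta_r d i v Hi). apply Csum_ext; intros j _. destruct (Nat.eqb i j); ring.
Qed.

(* A unit vector maximising v* A v is an eigenvector: it lies in the kernel of (max) Id - A >= 0. *)
Lemma quad_maximizer_IsEig d A w : Hermitian d A -> norm2 d w = 1 ->
  LeScalar d A (re (quad d A w)) -> IsEig d A (re (quad d A w)).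
Proof.
  intros HH Hnw HL. set (lam := re (quad d A w)) in *.
  set (B := fun i j => Cadd (Cmul (RtoC lam) (Idm d i j)) (Cmul (RtoC (-1)) (A i j))).
  assert (HBq : forall v, re (quad d B v) = lam * norm2 d v - re (quad d A v))
    by (intros v; unfold B; rewrite quad_comb, quad_Idm; simpl; ring).
  assert (HBH : Hermitian d B).
  { intros i j Hi Hj. unfold B.
    rewrite Cconj_add, !Cconj_mul, !Cconj_RtoC, Idm_diag_mat, (diag_mat_hermitian d _ i j), (HH i j)
      by auto.
    reflexivity. }
  assert (Hk : forall i, (i < d)%nat -> mulmv d B w i = C0).
  { apply quad_nonneg_kernel; auto.
    - intros v. rewrite HBq. specialize (HL v). lra.
    - rewrite HBq, Hnw. unfold lam. ring. }
  exists w. split.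
  - apply NNPP. intros Hno. assert (norm2 d w = 0); [|lra].
    rewrite norm2_sum. apply Rsum_eq0. intros i Hi.
    replace (w i) with C0 by (apply NNPP; intros Hne; apply Hno; exists i; auto). simpl; ring.
  - intros i Hi. specialize (Hk i Hi). unfold B in Hk. rewrite mulmv_comb_mat, mulmv_Idm in Hk by auto.
    change (Csum d (fun j => Cmul (A i j) (w j))) with (mulmv d A w i).
    destruct (mulmv d A w i), (w i). injection Hk; intros. apply C_ext; simpl in *; lra.
Qed.

Lemma density_LeScalar_1 d sg : Density d sg -> LeScalar d sg 1.
Proof.
  intros [_ [[HH HP] Htr]]. replace 1 with (re (trace d sg)) by (rewrite Htr; reflexivity).
  apply LeScalar_trace; auto. intros v; apply HP.
Qed.

(* Summing the diagonal bounds sg_ii <= l gives 1 = tr sg <= d l. *)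
Lemma density_LeScalar_lower d sg l : (0 < d)%nat -> Density d sg -> LeScalar d sg l -> / INR d <= l.
Proof.
  intros Hd [_ [_ Htr]] HL. assert (0 < INR d) by (apply lt_0_INR; lia).
  assert (H1 : 1 <= INR d * l).
  { replace 1 with (re (trace d sg)) by (rewrite Htr; reflexivity).
    unfold trace. rewrite re_Csum, <- Rsum_const. apply Rsum_le. intros i Hi.
    specialize (HL (basis_vec i C1)). rewrite quad_basis_vec, norm2_basis_vec in HL by auto.
    destruct (sg i i); simpl in *; lra. }
  apply (Rmult_le_reg_l (INR d)); auto. rewrite Rinv_r by lra. lra.
Qed.

Lemma density_LambdaMax d sg : (0 < d)%nat -> Density d sg ->
  exists l, LambdaMax d sg l /\ LeScalar d sg l.
Proof.
  intros Hd Hsg. destruct (quad_max_attained d sg 1 Hd (density_LeScalar_1 d sg Hsg)) as [w [Hw HL]].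
  exists (re (quad d sg w)). split; auto. split.
  - apply quad_maximizer_IsEig; auto. apply Hsg.
  - intros m Hm. apply (IsEig_le d sg); auto.
Qed.

Lemma density_LambdaMax_bounds d sg l : (0 < d)%nat -> Density d sg -> LambdaMax d sg l ->
  LeScalar d sg l /\ / INR d <= l <= 1.
Proof.
  intros Hd Hsg Hl. destruct (density_LambdaMax d sg Hd Hsg) as [l' [Hl' HL]].
  rewrite (LambdaMax_unique d sg l l') by auto. split; auto. split.
  - apply (density_LeScalar_lower d sg); auto.
  - apply (IsEig_le d sg); [apply density_LeScalar_1; auto|apply Hl'].
Qed.

(** * Closedness of the ball *)

Lemma density_diag_bound d sg i : Density d sg -> (i < d)%nat -> 0 <= re (sg i i) <= 1.
Proof.
  intros [_ [[HH HP] Htr]] Hi. assert (HPw : QuadNonneg d sg) by (intros v; apply HP).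
  split; [apply (quad_nonneg_diag d); auto|].
  replace 1 with (re (trace d sg)) by (rewrite Htr; reflexivity). unfold trace. rewrite re_Csum.
  apply (Rsum_term_le d (fun i => re (sg i i))); auto. intros; apply (quad_nonneg_diag d); auto.
Qed.

(* Positivity on the vectors e_i + y e_j, y in {1, -1, i, -i}, bounds |Re sg_ij| and |Im sg_ij|. *)
Lemma density_entry_bound d sg i j : Density d sg -> (i < d)%nat -> (j < d)%nat ->
  Rabs (re (sg i j)) <= 1 /\ Rabs (im (sg i j)) <= 1.
Proof.
  intros Hs Hi Hj. pose proof (density_diag_bound d sg i Hs Hi) as Di.
  pose proof (density_diag_bound d sg j Hs Hj) as Dj.
  destruct Hs as [_ [[HH HP] _]].
  assert (Hii : im (sg i i) = 0) by (apply (hermitian_diag_real d); auto).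
  destruct (Nat.eq_dec i j) as [<-|Hne].
  - rewrite Hii, Rabs_R0. split; [apply Rabs_le|]; lra.
  - assert (Hji : sg j i = Cconj (sg i j)) by (apply HH; auto).
    assert (Hjj : im (sg j j) = 0) by (apply (hermitian_diag_real d); auto).
    assert (Q := fun y => proj2 (HP (basis_vec2 i C1 j y))).
    pose proof (Q C1) as Q1. pose proof (Q (mkC (-1) 0)) as Q2.
    pose proof (Q (mkC 0 1)) as Q3. pose proof (Q (mkC 0 (-1))) as Q4.
    rewrite quad_basis_vec2, Hji in Q1, Q2, Q3, Q4 by auto.
    destruct (sg i i), (sg j j), (sg i j). simpl in *.
    split; apply Rabs_le; nra.
Qed.

Lemma Cmod_le_re_im z : Cmod z <= Rabs (re z) + Rabs (im z).
Proof.
  pose proof (Rabs_pos (re z)). pose proof (Rabs_pos (im z)).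
  unfold Cmod. rewrite <- (sqrt_Rsqr (Rabs (re z) + Rabs (im z))) by lra.
  apply sqrt_le_1_alt. unfold Rsqr.
  assert (Ha : Rabs (re z) * Rabs (re z) = re z * re z) by (rewrite <- Rabs_mult; apply Rabs_right; nra).
  assert (Hb : Rabs (im z) * Rabs (im z) = im z * im z) by (rewrite <- Rabs_mult; apply Rabs_right; nra).
  nra.
Qed.

Section Limit.
Variables (d : nat) (sgs : nat -> Mat) (S : Mat).
Hypothesis Hden : forall n, Density d (sgs n).
Hypothesis Hsup : supported d S.
Hypothesis Hcv : forall i j, (i < d)%nat -> (j < d)%nat -> Ccv (fun n => sgs n i j) (S i j).

Lemma Ccv_quad_limit v : Ccv (fun n => quad d (sgs n) v) (quad d S v).
Proof. apply (Ccv_quad d sgs S (fun _ => v) v); auto. intros; apply Ccv_const. Qed.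

Lemma density_limit : Density d S.
Proof.
  split; [auto|split; [split|]].
  - intros i j Hi Hj. apply (Ccv_unique (fun n => sgs n i j)); auto.
    apply (Ccv_ext (fun n => Cconj (sgs n j i))); [intros n; symmetry; apply (Hden n); auto|].
    apply Ccv_conj; auto.
  - intros v. destruct (Ccv_quad_limit v) as [Hre Him]. split.
    + apply (UL_sequence (fun n => im (quad d (sgs n) v))); auto.
      apply (Un_cv_ext (fun _ => 0)); [intros n; symmetry; apply (Hden n)|apply Un_cv_const].
    + apply (Rle_cv_lim (Un := fun _ => 0) (Vn := fun n => re (quad d (sgs n) v)));
        [intros n; apply (Hden n)|apply Un_cv_const|auto].
  - apply (Ccv_unique (fun n => trace d (sgs n))).
    + apply (Ccv_Csum d (fun n i => sgs n i i)). intros; apply Hcv; auto.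
    + apply (Ccv_ext (fun _ => C1)); [intros n; symmetry; apply (Hden n)|apply Ccv_const].
Qed.

Lemma LeScalar_limit (ls : nat -> R) l : (forall n, LeScalar d (sgs n) (ls n)) -> Un_cv ls l ->
  LeScalar d S l.
Proof.
  intros HL Hl v.
  apply (Rle_cv_lim (Un := fun n => re (quad d (sgs n) v)) (Vn := fun n => ls n * norm2 d v)).
  - intros n; apply HL.
  - apply Ccv_quad_limit.
  - apply (CV_mult ls (fun _ => norm2 d v)); auto. apply Un_cv_const.
Qed.

Lemma mdist_limit_small delta : 0 < delta -> exists n, mdist d S (sgs n) < delta.
Proof.
  intros Hdelta.
  set (err := fun n => Rsum d (fun i => Rsum d (fun j =>
     Rabs (re (S i j) - re (sgs n i j)) + Rabs (im (S i j) - im (sgs n i j))))).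
  assert (Herr : Un_cv err 0).
  { replace 0 with (Rsum d (fun i => Rsum d (fun j => 0 + 0)))
      by (apply Rsum_eq0; intros; apply Rsum_eq0; intros; ring).
    apply Un_cv_Rsum; intros i Hi. apply Un_cv_Rsum; intros j Hj.
    destruct (Hcv i j Hi Hj) as [Hr Him].
    apply CV_plus; apply Un_cv_dist_0; auto. }
  destruct (Herr delta Hdelta) as [N HN]. exists N. specialize (HN N (Nat.le_refl N)).
  unfold Rdist in HN. rewrite Rminus_0_r in HN.
  eapply Rle_lt_trans; [|eapply Rle_lt_trans; [apply Rle_abs|exact HN]].
  apply Rsum_le; intros i _. apply Rsum_le; intros j _. apply Cmod_le_re_im.
Qed.

End Limit.

Lemma mdist_diag d x : mdist d x x = 0.
Proof.
  unfold mdist. apply Rsum_eq0; intros i _. apply Rsum_eq0; intros j _.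
  unfold Cmod. replace (re (Csub (x i j) (x i j)) * re (Csub (x i j) (x i j))
                        + im (Csub (x i j) (x i j)) * im (Csub (x i j) (x i j))) with 0
    by (simpl; ring).
  apply sqrt_0.
Qed.

Lemma Ball_limit d D eps rho (sgs : nat -> Mat) S : ContinuousOn d D -> Density d rho ->
  (forall n, Ball d D eps rho (sgs n)) -> supported d S ->
  (forall i j, (i < d)%nat -> (j < d)%nat -> Ccv (fun n => sgs n i j) (S i j)) ->
  Ball d D eps rho S.
Proof.
  intros HDc Hrho Hs Hsup Hcv.
  assert (HS : Density d S) by (apply (density_limit d sgs); auto; intros; apply Hs).
  split; auto. apply Rnot_lt_le. intros Hgt.
  destruct (HDc S rho HS Hrho (D S rho - eps)) as [delta [Hdelta Hcont]]; [lra|].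
  destruct (mdist_limit_small d sgs S Hcv delta Hdelta) as [n Hn].
  specialize (Hcont (sgs n) rho (proj1 (Hs n)) Hrho Hn ltac:(rewrite mdist_diag; auto)).
  destruct (Hs n) as [_ HB]. apply Rabs_def2 in Hcont. lra.
Qed.

Lemma Ball_LeScalar_limit d D eps rho (sgs : nat -> Mat) (ls : nat -> R) l :
  ContinuousOn d D -> Density d rho ->
  (forall n, Ball d D eps rho (sgs n) /\ LeScalar d (sgs n) (ls n)) -> Un_cv ls l ->
  exists sg, Ball d D eps rho sg /\ LeScalar d sg l.
Proof.
  intros HDc Hrho Hs Hl.
  destruct (mat_seq_compact d sgs 1) as [phi [Al [Hphi Hc]]].
  { intros n i j Hi Hj. apply (density_entry_bound d); auto. apply (Hs n). }
  set (S := fun i j => if (Nat.ltb i d && Nat.ltb j d)%bool then Al i j else C0).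
  assert (Hsup : supported d S).
  { intros i j Hij. unfold S.
    destruct Hij as [H|H]; apply Nat.ltb_ge in H; rewrite H; [|rewrite Bool.andb_false_r]; auto. }
  assert (HcS : forall i j, (i < d)%nat -> (j < d)%nat -> Ccv (fun n => sgs (phi n) i j) (S i j)).
  { intros i j Hi Hj. unfold S.
    apply Nat.ltb_lt in Hi as Hi'; apply Nat.ltb_lt in Hj as Hj'. rewrite Hi', Hj'. auto. }
  exists S. split.
  - apply (Ball_limit d D eps rho (fun n => sgs (phi n))); auto. intros; apply Hs.
  - apply (LeScalar_limit d (fun n => sgs (phi n)) S HcS (fun n => ls (phi n))).
    + intros; apply Hs.
    + apply Un_cv_subseq; auto.
Qed.

(** * A state of maximal min-entropy in the ball *)

Lemma Ball_center d D eps rho : IsMetricOn d D -> Density d rho -> 0 <= eps -> Ball d D eps rho rho.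
Proof.
  intros HDm Hrho Heps. split; auto.
  destruct (HDm rho rho rho Hrho Hrho Hrho) as [_ [[_ H] _]]. rewrite (H eq_refl). auto.
Qed.

Lemma Ball_LeScalar_min d D eps rho : (0 < d)%nat -> ContinuousOn d D -> Density d rho ->
  Ball d D eps rho rho ->
  exists sg l, Ball d D eps rho sg /\ LeScalar d sg l /\
    forall sg' l', Ball d D eps rho sg' -> LeScalar d sg' l' -> l <= l'.
Proof.
  intros Hd HDc Hrho Hc. set (B := Ball d D eps rho) in *.
  (* the supremum of P is minus the infimum of the attainable bounds l *)
  set (P := fun x => exists sg, B sg /\ LeScalar d sg (- x)).
  destruct (completeness P) as [s [Hub Hlub]].
  { exists 0. intros x [sg [HB HL]].
    pose proof (density_LeScalar_lower d sg (- x) Hd (proj1 HB) HL).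
    assert (0 < / INR d) by (apply Rinv_0_lt_compat, lt_0_INR; lia). lra. }
  { exists (-1), rho. split; auto. replace (- -1) with 1 by ring. apply density_LeScalar_1; auto. }
  assert (Hex : forall n : nat, exists sg, B sg /\ LeScalar d sg (- s + / (INR n + 1))).
  { intros n. apply NNPP. intros Hno.
    assert (0 < / (INR n + 1)) by (apply Rinv_0_lt_compat; pose proof (pos_INR n); lra).
    enough (s <= s - / (INR n + 1)) by lra.
    apply Hlub. intros x [sg [HB HL]]. apply Rnot_lt_le. intros Hlt. apply Hno. exists sg.
    split; auto. apply (LeScalar_mono d sg (- x)); auto; lra. }
  destruct (choice _ Hex) as [sgs Hsgs].
  destruct (Ball_LeScalar_limit d D eps rho sgs (fun n => - s + / (INR n + 1)) (- s) HDc Hrho Hsgs)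
    as [sg [HB HL]].
  { pose proof (CV_plus _ _ _ _ (Un_cv_const (- s)) Un_cv_inv_succ) as H.
    rewrite Rplus_0_r in H. exact H. }
  exists sg, (- s). split; [auto|split; [auto|]].
  intros sg' l' HB' HL'. enough (- l' <= s) by lra.
  apply Hub. exists sg'. rewrite Ropp_involutive. auto.
Qed.

Lemma Ball_LambdaMax_min d D eps rho : (0 < d)%nat -> ContinuousOn d D -> Density d rho ->
  Ball d D eps rho rho ->
  exists sg l, Ball d D eps rho sg /\ LambdaMax d sg l /\
    forall sg' l', Ball d D eps rho sg' -> LeScalar d sg' l' -> l <= l'.
Proof.
  intros Hd HDc Hrho Hc.
  destruct (Ball_LeScalar_min d D eps rho Hd HDc Hrho Hc) as [sg [l [HB [HL Hmin]]]].
  destruct (density_LambdaMax d sg Hd (proj1 HB)) as [l0 [Hl0 _]].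
  exists sg, l0. split; [auto|split; [auto|]].
  intros sg' l' HB' HL'. apply Rle_trans with l.
  - exact (IsEig_le d sg l l0 HL (proj1 Hl0)).
  - exact (Hmin sg' l' HB' HL').
Qed.

(** * Logarithms and integer parts *)

Lemma log2_le x y : 0 < x -> x <= y -> log2 x <= log2 y.
Proof.
  intros Hx Hxy. unfold log2. apply Rmult_le_compat_r.
  - left. apply Rinv_0_lt_compat. rewrite <- ln_1. apply ln_increasing; lra.
  - destruct Hxy as [H|H]; [left; apply ln_increasing; lra|subst; lra].
Qed.

Lemma Rpower2_opp_log2 l : 0 < l -> Rpower 2 (- log2 l) = / l.
Proof.
  intros Hl. assert (0 < ln 2) by (rewrite <- ln_1; apply ln_increasing; lra).
  unfold Rpower, log2. replace (- (ln l / ln 2) * ln 2) with (- ln l) by (field; lra).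
  rewrite exp_Ropp, exp_ln; auto.
Qed.

Lemma floorR_nat x : 1 <= x -> exists m : nat, floorR x = INR m /\ INR m <= x < INR m + 1 /\ (1 <= m)%nat.
Proof.
  intros Hx. destruct (base_Int_part x) as [H1 H2]. unfold floorR.
  assert (Hz : (1 <= Int_part x)%Z).
  { apply le_IZR. apply Rnot_lt_le. intros Hlt.
    assert (Int_part x < 1)%Z by (apply lt_IZR; auto).
    assert (Int_part x <= 0)%Z by lia. apply IZR_le in H0. lra. }
  exists (Z.to_nat (Int_part x)). rewrite INR_IZR_INZ, Z2Nat.id by lia.
  split; [auto|split; [lra|lia]].
Qed.

Lemma INR_le_floor k m x : INR k <= x -> x < INR m + 1 -> (k <= m)%nat.
Proof.
  intros H1 H2. assert (H : INR k < INR (m + 1)) by (rewrite plus_INR; simpl; lra).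
  apply INR_lt in H. lia.
Qed.

Lemma floorR_eq x m : 1 <= x -> INR m <= x < INR m + 1 -> floorR x = INR m.
Proof.
  intros Hx Hm. destruct (floorR_nat x Hx) as [m' [-> [Hm' _]]]. f_equal.
  apply Nat.le_antisymm; apply (INR_le_floor _ _ x); lra.
Qed.

Lemma log2_Rpower2 h : log2 (Rpower 2 h) = h.
Proof.
  assert (0 < ln 2) by (rewrite <- ln_1; apply ln_increasing; lra).
  unfold log2. rewrite ln_Rpower. field; lra.
Qed.

(** * Cost in terms of an optimal state *)

Lemma IsSup_max (P : R -> Prop) s : P s -> (forall x, P x -> x <= s) -> IsSup P s.
Proof. intros Hs Hub. split; auto. Qed.
Lemma IsInf_min (P : R -> Prop) s : P s -> (forall x, P x -> s <= x) -> IsInf P s.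
Proof. intros Hs Hlb. split; auto. Qed.

Section OptimalState.
Variables (d : nat) (B : Mat -> Prop) (sg0 : Mat) (l0 : R) (m0 : nat).
Hypothesis Hd : (1 <= d)%nat.
Hypothesis HB : forall sg, B sg -> Density d sg.
Hypothesis Hsg0 : B sg0.
Hypothesis Hl0 : LambdaMax d sg0 l0.
Hypothesis Hopt : forall sg l, B sg -> LeScalar d sg l -> l0 <= l.
Hypothesis Hm0 : INR m0 <= / l0 < INR m0 + 1.

Let Hd0 : (0 < d)%nat. Proof. lia. Qed.
Let HdR : 0 < INR d. Proof. apply lt_0_INR; lia. Qed.

Lemma optimal_bounds : LeScalar d sg0 l0 /\ / INR d <= l0 <= 1.
Proof. apply density_LambdaMax_bounds; auto. Qed.

Lemma optimal_count_bounds : (1 <= m0 <= d)%nat.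
Proof.
  destruct optimal_bounds as [_ [Hlo Hhi]].
  assert (Hl0pos : 0 < l0) by (pose proof (Rinv_0_lt_compat _ HdR); lra).
  split.
  - apply (INR_le_floor 1 m0 (/ l0)); [|lra]. simpl.
    rewrite <- Rinv_1. apply Rinv_le_contravar; lra.
  - apply INR_le. apply Rle_trans with (/ l0); [lra|].
    rewrite <- (Rinv_inv (INR d)). apply Rinv_le_contravar; auto.
    apply Rinv_0_lt_compat; auto.
Qed.

Lemma Conv_CoinK_iff k : (1 <= k <= d)%nat -> Conv d (coinSet d (CoinK k)) B <-> (k <= m0)%nat.
Proof.
  intros Hk. assert (HkR : 0 < INR k) by (apply lt_0_INR; lia).
  destruct optimal_bounds as [HL0 [Hlo _]].
  assert (Hl0pos : 0 < l0) by (pose proof (Rinv_0_lt_compat _ HdR); lra).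
  split.
  - intros [S [HS HSB]]. specialize (HSB (PiK k) eq_refl).
    pose proof (Hopt _ _ HSB (unital_channel_image_PiK d k S ltac:(lia) ltac:(lia) HS)) as Hle.
    apply (INR_le_floor k m0 (/ l0)); [|lra].
    rewrite <- (Rinv_inv (INR k)). apply Rinv_le_contravar; auto.
  - intros Hkm.
    assert (Hle : l0 <= / INR k).
    { rewrite <- (Rinv_inv l0). apply Rinv_le_contravar; auto. apply le_INR in Hkm. lra. }
    destruct (unital_channel_from_PiK d k sg0 Hk (HB sg0 Hsg0) (LeScalar_mono d sg0 l0 _ HL0 Hle))
      as [S [HS HSsg]].
    exists S. split; auto. intros A HA. simpl in HA. subst A. rewrite HSsg. auto.
Qed.

Lemma Conv_CoinOmega : Conv d (coinSet d CoinOmega) B -> m0 = d.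
Proof.
  intros [S [HS HSB]]. pose proof optimal_count_bounds.
  enough (d <= m0)%nat by lia. apply Conv_CoinK_iff; [lia|].
  exists S. split; auto. intros A HA. simpl in HA. subst A. apply HSB, PiK_density; auto.
Qed.

Lemma IsCost_optimal : IsCost d B (log2 (INR d) - log2 (INR m0)).
Proof.
  pose proof optimal_count_bounds. apply IsInf_min.
  - exists (CoinK m0). split; [simpl; lia|split; [apply Conv_CoinK_iff; lia|reflexivity]].
  - intros x [[k|] [Hc [Hconv ->]]]; simpl in *.
    + apply Conv_CoinK_iff in Hconv; auto.
      enough (log2 (INR k) <= log2 (INR m0)) by lra.
      apply log2_le; [apply lt_0_INR; lia|apply le_INR; auto].
    + rewrite (Conv_CoinOmega Hconv). lra.
Qed.

Lemma Rpower2_Hmin sg h : B sg -> Hmin d sg h -> 1 <= Rpower 2 h <= / l0.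
Proof.
  intros Hsg [l [Hl ->]].
  destruct (density_LambdaMax_bounds d sg l Hd0 (HB sg Hsg) Hl) as [HL [Hlo Hhi]].
  assert (Hlpos : 0 < l) by (pose proof (Rinv_0_lt_compat _ HdR); lra).
  assert (Hl0pos : 0 < l0) by (pose proof (proj1 (proj2 optimal_bounds)); pose proof (Rinv_0_lt_compat _ HdR); lra).
  rewrite Rpower2_opp_log2 by auto. split.
  - rewrite <- Rinv_1. apply Rinv_le_contravar; lra.
  - apply Rinv_le_contravar; auto. apply (Hopt sg); auto.
Qed.

Lemma Hmin_optimal : Hmin d sg0 (- log2 l0) /\ Rpower 2 (- log2 l0) = / l0.
Proof.
  split; [exists l0; auto|]. apply Rpower2_opp_log2.
  pose proof (proj1 (proj2 optimal_bounds)). pose proof (Rinv_0_lt_compat _ HdR); lra.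
Qed.

Lemma IsSup_Hmin : IsSup (fun h => exists sg, B sg /\ Hmin d sg h) (- log2 l0).
Proof.
  apply IsSup_max; [exists sg0; split; [auto|apply Hmin_optimal]|].
  intros h [sg [Hsg Hh]]. destruct (Rpower2_Hmin sg h Hsg Hh) as [H1 H2].
  rewrite <- (log2_Rpower2 h), <- (log2_Rpower2 (- log2 l0)), (proj2 Hmin_optimal).
  apply log2_le; lra.
Qed.

Lemma floor_optimal : floorR (Rpower 2 (- log2 l0)) = INR m0.
Proof.
  rewrite (proj2 Hmin_optimal). apply floorR_eq; auto.
  pose proof optimal_count_bounds. apply Rle_trans with (INR m0); [apply (le_INR 1)|]; lia || lra.
Qed.

Lemma IsSup_floor_Hmin :
  IsSup (fun x => exists sg h, B sg /\ Hmin d sg h /\ x = log2 (floorR (Rpower 2 h)))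
        (log2 (INR m0)).
Proof.
  apply IsSup_max.
  - exists sg0, (- log2 l0). split; [auto|split; [apply Hmin_optimal|]]. rewrite floor_optimal; auto.
  - intros x [sg [h [Hsg [Hh ->]]]]. destruct (Rpower2_Hmin sg h Hsg Hh) as [H1 H2].
    destruct (floorR_nat _ H1) as [m [-> [Hm Hm1]]].
    apply log2_le; [apply lt_0_INR; lia|apply le_INR, (INR_le_floor m m0 (Rpower 2 h)); lra].
Qed.

End OptimalState.

Theorem mainTheorem18 (d : nat) (hd : (1 <= d)%nat)
  (D : Mat -> Mat -> R) (HDm : IsMetricOn d D) (HDc : ContinuousOn d D)
  (rho : Mat) (Hrho : Density d rho) (eps : R) (Heps : 0 <= eps <= 1) :
  exists cost s heps,
    IsCost d (Ball d D eps rho) cost /\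
    IsSup (fun x => exists sigma h, Ball d D eps rho sigma /\ Hmin d sigma h /\
                                    x = log2 (floorR (Rpower 2 h))) s /\
    IsSup (fun h => exists sigma, Ball d D eps rho sigma /\ Hmin d sigma h) heps /\
    cost = log2 (INR d) - s /\
    cost = log2 (INR d) - log2 (floorR (Rpower 2 heps)).
Proof.
  assert (Hcenter : Ball d D eps rho rho) by (apply Ball_center; auto; lra).
  destruct (Ball_LambdaMax_min d D eps rho ltac:(lia) HDc Hrho Hcenter)
    as [sg0 [l0 [Hsg0 [Hl0 Hopt]]]].
  destruct (density_LambdaMax_bounds d sg0 l0 ltac:(lia) (proj1 Hsg0) Hl0) as [_ [Hlo Hhi]].
  assert (Hl0pos : 0 < l0) by (pose proof (Rinv_0_lt_compat (INR d) ltac:(apply lt_0_INR; lia)); lra).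
  destruct (floorR_nat (/ l0)) as [m0 [_ [Hm0 _]]].
  { rewrite <- Rinv_1. apply Rinv_le_contravar; lra. }
  assert (HB : forall sg, Ball d D eps rho sg -> Density d sg) by (intros sg []; auto).
  exists (log2 (INR d) - log2 (INR m0)), (log2 (INR m0)), (- log2 l0).
  split; [|split; [|split; [|split]]].
  - apply (IsCost_optimal d (Ball d D eps rho) sg0 l0); auto.
  - apply (IsSup_floor_Hmin d (Ball d D eps rho) sg0 l0); auto.
  - apply (IsSup_Hmin d (Ball d D eps rho) sg0 l0); auto.
  - reflexivity.
  - rewrite (floor_optimal d (Ball d D eps rho) sg0 l0 m0); auto.
Qed.
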